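(* Let $\Pi_{i\in 1..n} S_i$ be a program of the source language and let $\mathcal C$ be the set of channels occurring in it. Then $$\Pi_{i\in 1..n} S_i \;\sim\; \Pi_{c\in\mathcal C}\odot_c \;|\; \Pi_{i\in 1..n}\widehat{S_i},$$ where $\sim$ is the largest relation between programs and machine states such that $\mathcal P\sim\sigma$ implies all of: (Correspondence) $\sigma\to^\star\sigma'$ for some $\sigma'$ with $\ulcorner\mathcal P\urcorner=\ulcorner\sigma'\urcorner$; (Safety) whenever $\sigma\to\sigma'$, there is $\mathcal P'$ with $\mathcal P\to^\star\mathcal P'$ and $\mathcal P'\sim\sigma'$; (Progress) whenever $\mathcal P$ can reduce (i.e. $\mathcal P\to\mathcal Q$ for some $\mathcal Q$), there are $\sigma'$ and $\mathcal P'$ with $\sigma\to^+\sigma'$, $\mathcal P\to\mathcal P'$ and $\mathcal P'\sim\sigma'$.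
   Context: Source language. Actions $\alpha,\beta$ are of the form $c$ (input on channel $c$) or $\overline c$ (output on channel $c$). A program is a parallel composition $S_1\,|\,\dots\,|\,S_n$ where each $S_i$ is either an action $\alpha$ or $\mathsf{select}(\vec\alpha)$ for a finite list of actions $\vec\alpha$. Program reduction $\to$ is generated by the single rule: if $c\in\vec\alpha$ and $\overline c\in\vec\beta$ then $\mathsf{select}(\vec\alpha)\,|\,\mathsf{select}(\vec\beta)\to c\,|\,\overline c$, closed under the usual structural rules for parallel composition (commutativity, associativity, reduction inside a parallel context); actions themselves do not reduce. Abstract machine. States are $\sigma::=\sigma\,|\,\sigma' \mid (\nu p)\,\sigma \mid \varsigma$, where $\varsigma$ is a sub-state of one of the following forms. Point sub-states: $p\mapsto\alpha$ (unmatched), $\mathsf{Candidate}_p$ (matched), $\alpha$ (married/released action). Channel sub-states: $\odot_c$ (free), $\mathsf{Match}_c(p,q)$ (busy). Synchronizer sub-states: $\Box_s$ (open), $\boxtimes_s$ (closed), $\mathsf{Select}_s(p)$, $\mathsf{Reject}(p)$, $\mathsf{Done}_s(p)$, $\mathsf{Retry}_s$. Here $p,q$ range over point names, $c$ over channels, and a synchronizer $s$ is a finite partial function from points to actions, also written (and usable as a state) as the parallel composition of its bindings $p\mapsto\alpha$; distinct synchronizers have disjoint domains. Transitions $\to$ are given by the following rules, closed under the usual pi-calculus structural rules for parallel composition and name restriction (commutativity/associativity of $|$, scope extrusion, $\alpha$-renaming, and reduction under $|$ and $\nu$): (I) $p\mapsto c\,|\,q\mapsto\overline c\,|\,\odot_c\to\mathsf{Candidate}_p\,|\,\mathsf{Candidate}_q\,|\,\mathsf{Match}_c(p,q)$;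 (II.i) if $p\in\mathrm{dom}(s)$: $\mathsf{Candidate}_p\,|\,\Box_s\to\boxtimes_s\,|\,\mathsf{Select}_s(p)$; (II.ii) if $p\in\mathrm{dom}(s)$: $\mathsf{Candidate}_p\,|\,\boxtimes_s\to\boxtimes_s\,|\,\mathsf{Reject}(p)$; (III.i) $\mathsf{Select}_s(p)\,|\,\mathsf{Select}_{s'}(q)\,|\,\mathsf{Match}_c(p,q)\to\mathsf{Done}_s(p)\,|\,\mathsf{Done}_{s'}(q)\,|\,\odot_c$; (III.ii) $\mathsf{Select}_s(p)\,|\,\mathsf{Reject}(q)\,|\,\mathsf{Match}_c(p,q)\to\mathsf{Retry}_s\,|\,\odot_c$; (III.iii) $\mathsf{Reject}(p)\,|\,\mathsf{Select}_s(q)\,|\,\mathsf{Match}_c(p,q)\to\mathsf{Retry}_s\,|\,\odot_c$; (III.iv) $\mathsf{Reject}(p)\,|\,\mathsf{Reject}(q)\,|\,\mathsf{Match}_c(p,q)\to\odot_c$; (IV.i) if $s(p)=\alpha$: $\mathsf{Done}_s(p)\to\alpha$; (IV.ii) if $\mathrm{dom}(s)=\vec p$: $\mathsf{Retry}_s\to(\nu\vec p)(\Box_s\,|\,s)$. Compilation. For a program $S$ component: $\widehat\alpha=\alpha$, and $\widehat{\mathsf{select}(\vec{\alpha_j})}=(\nu\vec{p_j})(\Box_s\,|\,s)$ where $s=\Pi_j(p_j\mapsto\alpha_j)$ for fresh point names $\vec{p_j}$. The program $\Pi_{i\in1..n}S_i$ with channel set $\mathcal C$ compiles to $\Pi_{c\in\mathcal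 C}\odot_c\,|\,\Pi_{i\in1..n}\widehat{S_i}$. Denotations are multisets of actions: $\ulcorner S_1|\dots|S_n\urcorner=\ulcorner S_1\urcorner\uplus\dots\uplus\ulcorner S_n\urcorner$, $\ulcorner\alpha\urcorner=[\alpha]$, $\ulcorner\mathsf{select}(\vec\alpha)\urcorner=[]$; $\ulcorner\sigma|\sigma'\urcorner=\ulcorner\sigma\urcorner\uplus\ulcorner\sigma'\urcorner$, $\ulcorner(\nu p)\sigma\urcorner=\ulcorner\sigma\urcorner$, and for a sub-state $\ulcorner\varsigma\urcorner=[\alpha]$ if $\varsigma$ is an action $\alpha$ and $[]$ otherwise (in particular bindings $p\mapsto\alpha$ contribute nothing). $\to^\star$ and $\to^+$ denote reflexive-transitive and transitive closure. *)

From Stdlib Require Import List Permutation Arith.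
Import ListNotations.

Definition chan := nat.
Definition point := nat.

Inductive action : Type :=
| AIn : chan -> action
| AOut : chan -> action.

Definition chan_of (a : action) : chan :=
  match a with AIn c => c | AOut c => c end.

Inductive comp : Type :=
| CAct : action -> comp
| CSel : list action -> comp.

(* A program S_1 | ... | S_n is a list of components; parallel composition
   is taken modulo commutativity/associativity, i.e. lists up to Permutation. *)
Definition program := list comp.

Definition preduce (P Q : program) : Prop :=
  exists (al be : list action) (c : chan) (rest : program),
    Permutation P (CSel al :: CSel be :: rest) /\
    In (AIn c) al /\ In (AOut c) be /\
    Permutation Q (CAct (AIn c) :: CAct (AOut c) :: rest).

Inductive pstar : program -> program -> Prop :=
| pstar_refl : forall P, pstar P P
| pstar_step : forall P Q R, preduce P Q -> pstar Q R -> pstar P R.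

Definition comp_chans (S : comp) : list chan :=
  match S with
  | CAct a => [chan_of a]
  | CSel al => map chan_of al
  end.

Definition occurs (c : chan) (P : program) : Prop :=
  exists S, In S P /\ In c (comp_chans S).

(* a synchronizer: finite partial function from points to actions,
   given by its list of bindings *)
Definition sync := list (point * action).

Definition dom (s : sync) : list point := map fst s.

Inductive sub : Type :=
| SBind : point -> action -> sub
| SCand : point -> sub
| SAct : action -> sub
| SFree : chan -> sub                   (* odot_c *)
| SMatch : chan -> point -> point -> sub
| SOpen : sync -> sub
| SClosed : sync -> sub
| SSelect : sync -> point -> sub
| SReject : point -> sub
| SDone : sync -> point -> sub
| SRetry : sync -> sub.

Inductive state : Type :=
| Par : state -> state -> state
| Nu : point -> state -> state
| Sub : sub -> state.

Fixpoint parl (x : state) (ys : list state) : state :=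
  match ys with
  | [] => x
  | y :: ys' => Par x (parl y ys')
  end.

Fixpoint nus (ps : list point) (st : state) : state :=
  match ps with
  | [] => st
  | p :: ps' => Nu p (nus ps' st)
  end.

Definition bindings (s : sync) : list state :=
  map (fun pa => Sub (SBind (fst pa) (snd pa))) s.

Definition sub_fn (x : sub) : list point :=
  match x with
  | SBind p _ => [p]
  | SCand p => [p]
  | SAct _ => []
  | SFree _ => []
  | SMatch _ p q => [p; q]
  | SOpen s => dom s
  | SClosed s => dom s
  | SSelect s p => p :: dom s
  | SReject p => [p]
  | SDone s p => p :: dom s
  | SRetry s => dom s
  end.

Fixpoint fn (st : state) : list point :=
  match st with
  | Par a b => fn a ++ fn b
  | Nu p a => remove Nat.eq_dec p (fn a)
  | Sub x => sub_fn x
  end.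

Definition swp (p q r : point) : point :=
  if Nat.eq_dec r p then q else if Nat.eq_dec r q then p else r.

Definition swap_sync (p q : point) (s : sync) : sync :=
  map (fun pa => (swp p q (fst pa), snd pa)) s.

Definition swap_sub (p q : point) (x : sub) : sub :=
  match x with
  | SBind r a => SBind (swp p q r) a
  | SCand r => SCand (swp p q r)
  | SAct a => SAct a
  | SFree c => SFree c
  | SMatch c r t => SMatch c (swp p q r) (swp p q t)
  | SOpen s => SOpen (swap_sync p q s)
  | SClosed s => SClosed (swap_sync p q s)
  | SSelect s r => SSelect (swap_sync p q s) (swp p q r)
  | SReject r => SReject (swp p q r)
  | SDone s r => SDone (swap_sync p q s) (swp p q r)
  | SRetry s => SRetry (swap_sync p q s)
  end.

Fixpoint swap (p q : point) (st : state) : state :=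
  match st with
  | Par a b => Par (swap p q a) (swap p q b)
  | Nu r a => Nu (swp p q r) (swap p q a)
  | Sub x => Sub (swap_sub p q x)
  end.

Inductive scong : state -> state -> Prop :=
| sc_refl : forall a, scong a a
| sc_sym : forall a b, scong a b -> scong b a
| sc_trans : forall a b c, scong a b -> scong b c -> scong a c
| sc_par : forall a a' b b', scong a a' -> scong b b' -> scong (Par a b) (Par a' b')
| sc_nu : forall p a a', scong a a' -> scong (Nu p a) (Nu p a')
| sc_comm : forall a b, scong (Par a b) (Par b a)
| sc_assoc : forall a b c, scong (Par (Par a b) c) (Par a (Par b c))
| sc_extr : forall p a b, ~ In p (fn b) -> scong (Par (Nu p a) b) (Nu p (Par a b))
| sc_nu_comm : forall p q a, scong (Nu p (Nu q a)) (Nu q (Nu p a))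
| sc_alpha : forall p q a, ~ In q (fn (Nu p a)) -> scong (Nu p a) (Nu q (swap p q a)).

Inductive mstep : state -> state -> Prop :=
| r_I : forall p q c,
    mstep (Par (Sub (SBind p (AIn c))) (Par (Sub (SBind q (AOut c))) (Sub (SFree c))))
          (Par (Sub (SCand p)) (Par (Sub (SCand q)) (Sub (SMatch c p q))))
| r_IIi : forall p s, In p (dom s) ->
    mstep (Par (Sub (SCand p)) (Sub (SOpen s)))
          (Par (Sub (SClosed s)) (Sub (SSelect s p)))
| r_IIii : forall p s, In p (dom s) ->
    mstep (Par (Sub (SCand p)) (Sub (SClosed s)))
          (Par (Sub (SClosed s)) (Sub (SReject p)))
| r_IIIi : forall s s' p q c,
    mstep (Par (Sub (SSelect s p)) (Par (Sub (SSelect s' q)) (Sub (SMatch c p q))))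
          (Par (Sub (SDone s p)) (Par (Sub (SDone s' q)) (Sub (SFree c))))
| r_IIIii : forall s p q c,
    mstep (Par (Sub (SSelect s p)) (Par (Sub (SReject q)) (Sub (SMatch c p q))))
          (Par (Sub (SRetry s)) (Sub (SFree c)))
| r_IIIiii : forall s p q c,
    mstep (Par (Sub (SReject p)) (Par (Sub (SSelect s q)) (Sub (SMatch c p q))))
          (Par (Sub (SRetry s)) (Sub (SFree c)))
| r_IIIiv : forall p q c,
    mstep (Par (Sub (SReject p)) (Par (Sub (SReject q)) (Sub (SMatch c p q))))
          (Sub (SFree c))
| r_IVi : forall s p a, In (p, a) s ->
    mstep (Sub (SDone s p)) (Sub (SAct a))
| r_IVii : forall s,
    mstep (Sub (SRetry s)) (nus (dom s) (parl (Sub (SOpen s)) (bindings s)))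
| r_par : forall a a' b, mstep a a' -> mstep (Par a b) (Par a' b)
| r_nu : forall p a a', mstep a a' -> mstep (Nu p a) (Nu p a')
| r_struct : forall a a1 a2 a', scong a a1 -> mstep a1 a2 -> scong a2 a' -> mstep a a'.

Inductive mstar : state -> state -> Prop :=
| mstar_refl : forall a, mstar a a
| mstar_step : forall a b c, mstep a b -> mstar b c -> mstar a c.

Definition mplus (a c : state) : Prop := exists b, mstep a b /\ mstar b c.

Definition den_comp (S : comp) : list action :=
  match S with CAct a => [a] | CSel _ => [] end.

Definition den_prog (P : program) : list action := flat_map den_comp P.

Definition den_sub (x : sub) : list action :=
  match x with SAct a => [a] | _ => [] end.

Fixpoint den_state (st : state) : list action :=
  match st with
  | Par a b => den_state a ++ den_state b
  | Nu _ a => den_state a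
  | Sub x => den_sub x
  end.

Definition hat_sel (n : point) (al : list action) : state :=
  let ps := seq n (length al) in
  let s := combine ps al in
  nus ps (parl (Sub (SOpen s)) (bindings s)).

Fixpoint hat_comps (n : point) (P : program) : list state :=
  match P with
  | [] => []
  | CAct a :: P' => Sub (SAct a) :: hat_comps n P'
  | CSel al :: P' => hat_sel n al :: hat_comps (n + length al) P'
  end.

(* Pi_{c in C} odot_c | Pi_i hat S_i; the dummy case [] only arises for
   the empty program with no channels, which is excluded in the theorem. *)
Definition compile (C : list chan) (P : program) : state :=
  match map (fun c => Sub (SFree c)) C ++ hat_comps 0 P with
  | [] => Sub (SFree 0)
  | x :: xs => parl x xs
  end.

Definition is_sim (R : program -> state -> Prop) : Prop :=
  forall P st, R P st ->
    (exists st', mstar st st' /\ Permutation (den_prog P) (den_state st')) /\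
    (forall st', mstep st st' -> exists P', pstar P P' /\ R P' st') /\
    ((exists Q, preduce P Q) ->
       exists st' P', mplus st st' /\ preduce P P' /\ R P' st').

(* the largest such relation: union of all relations satisfying is_sim *)
Definition sim (P : program) (st : state) : Prop :=
  exists R, is_sim R /\ R P st.

(* The simulation is  Sim P a := exists L, Flat a L /\ WellFormed L /\ P ~ abstr L.

   - Flat a L flattens a machine state a into the multiset L of its sub-states,
     making name binding explicit: a free point p is written 2p and every
     restricted point a distinct odd number.  Flattening is invariant under
     structural congruence (flat_scong), so a machine step becomes a rewrite
     FlatStep of multisets by one rule instance (mstep_flat).  Conversely,
     through a normal form nu B. (x1 | ... | xn) of states (normal_form), every
     rule instance visible in a flattening can be fired by the machine
     (fire_base, fire_retry).
   - WellFormed L is an invariant of reachable multisets (synchronizers own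
     disjoint points, matches are consistent, channels are present); it holds
     initially (wf_init) and is preserved by flat steps (wf_step).
   - abstr L reads a program off a multiset: open, selecting and retrying
     synchronizers are still selects, Done and released actions are actions.
     A flat step leaves abstr L unchanged up to permutation, except rule III.i
     which performs a program reduction (abstr_step).
   Correspondence fires the pending Done steps, Safety is mstep_flat followed
   by abstr_step, and Progress runs the machine, by induction on the pending
   work, until it commits a pair of selects. *)

From Stdlib Require Import List Permutation Arith Lia.
Import ListNotations.

Definition ren_sync (f : nat -> nat) (s : sync) : sync :=
  map (fun pa => (f (fst pa), snd pa)) s.

Definition ren (f : nat -> nat) (x : sub) : sub :=
  match x with
  | SBind p a => SBind (f p) a
  | SCand p => SCand (f p)
  | SAct a => SAct a
  | SFree c => SFree c
  | SMatch c p q => SMatch c (f p) (f q)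
  | SOpen s => SOpen (ren_sync f s)
  | SClosed s => SClosed (ren_sync f s)
  | SSelect s p => SSelect (ren_sync f s) (f p)
  | SReject p => SReject (f p)
  | SDone s p => SDone (ren_sync f s) (f p)
  | SRetry s => SRetry (ren_sync f s)
  end.

Lemma dom_ren f s : dom (ren_sync f s) = map f (dom s).
Proof. unfold dom, ren_sync. rewrite !map_map. reflexivity. Qed.

Lemma snd_ren f s : map snd (ren_sync f s) = map snd s.
Proof. unfold ren_sync. rewrite map_map. reflexivity. Qed.

Lemma ren_sync_ext f g s : (forall n, In n (dom s) -> f n = g n) -> ren_sync f s = ren_sync g s.
Proof.
  intro H. unfold ren_sync. apply map_ext_in. intros [p a] Hi. simpl.
  rewrite H; auto. unfold dom. apply in_map_iff. exists (p,a); auto.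
Qed.

Lemma ren_sync_comp f g s : ren_sync f (ren_sync g s) = ren_sync (fun n => f (g n)) s.
Proof. unfold ren_sync. rewrite map_map. reflexivity. Qed.

Lemma ren_sync_id f s : (forall n, In n (dom s) -> f n = n) -> ren_sync f s = s.
Proof.
  intro H. unfold ren_sync. rewrite <- (map_id s) at 2. apply map_ext_in.
  intros [p a] Hi. simpl. rewrite H; auto. unfold dom. apply in_map_iff. exists (p,a); auto.
Qed.

Lemma sub_fn_ren f x : sub_fn (ren f x) = map f (sub_fn x).
Proof. destruct x; simpl; try rewrite dom_ren; reflexivity. Qed.

Lemma ren_ext f g x : (forall n, In n (sub_fn x) -> f n = g n) -> ren f x = ren g x.
Proof.
  intro H; destruct x; simpl in *;
  try (rewrite (ren_sync_ext f g); [|intros; apply H; auto]);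
  try (rewrite H; [|auto]); try (rewrite (H n0); [|auto]); try reflexivity.
  - rewrite (H p0); auto.
Qed.

Lemma ren_id f x : (forall n, In n (sub_fn x) -> f n = n) -> ren f x = x.
Proof.
  intro H. transitivity (ren (fun n => n) x).
  - apply ren_ext. auto.
  - destruct x; simpl; try rewrite (ren_sync_id (fun n => n)); auto.
Qed.

Lemma ren_comp f g x : ren f (ren g x) = ren (fun n => f (g n)) x.
Proof. destruct x; simpl; try rewrite ren_sync_comp; reflexivity. Qed.

Lemma swap_sub_ren p q x : swap_sub p q x = ren (swp p q) x.
Proof. destruct x; reflexivity. Qed.

Definition names (L : list sub) : list nat := flat_map sub_fn L.

Lemma names_app L1 L2 : names (L1 ++ L2) = names L1 ++ names L2.
Proof. unfold names. apply flat_map_app. Qed.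

Lemma names_map f L : names (map (ren f) L) = map f (names L).
Proof.
  induction L; simpl; auto. unfold names in *. simpl. rewrite map_app, IHL, sub_fn_ren. reflexivity.
Qed.

Lemma in_names x L n : In x L -> In n (sub_fn x) -> In n (names L).
Proof. intros. unfold names. apply in_flat_map. eauto. Qed.

Lemma map_ren_ext f g L : (forall n, In n (names L) -> f n = g n) -> map (ren f) L = map (ren g) L.
Proof.
  intro H. apply map_ext_in. intros x Hx. apply ren_ext. intros. apply H. eapply in_names; eauto.
Qed.

Lemma map_ren_comp f g L : map (ren f) (map (ren g) L) = map (ren (fun n => f (g n))) L.
Proof. rewrite map_map. apply map_ext. intros. apply ren_comp. Qed.

Lemma map_ren_id f L : (forall n, In n (names L) -> f n = n) -> map (ren f) L = L.
Proof.
  intro H. rewrite <- (map_id L) at 2. apply map_ext_in. intros. apply ren_id.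
  intros. apply H. eapply in_names; eauto.
Qed.

Lemma Permutation_names L1 L2 : Permutation L1 L2 -> Permutation (names L1) (names L2).
Proof. apply Permutation_flat_map. Qed.

Lemma perm_in_names L1 L2 n : Permutation L1 L2 -> In n (names L1) -> In n (names L2).
Proof. intros P H. apply (Permutation_in _ (Permutation_names _ _ P)); auto. Qed.

Lemma swp_invol p q r : swp p q (swp p q r) = r.
Proof. unfold swp. repeat (destruct Nat.eq_dec; subst; try lia; auto). Qed.

Lemma swp_inj p q r1 r2 : swp p q r1 = swp p q r2 -> r1 = r2.
Proof. intro H. rewrite <- (swp_invol p q r1), <- (swp_invol p q r2), H. reflexivity. Qed.

Lemma swp_same p r : swp p p r = r.
Proof. unfold swp. repeat (destruct Nat.eq_dec; subst; auto). Qed.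

Lemma swp_l p q : swp p q p = q.
Proof. unfold swp. destruct Nat.eq_dec; congruence. Qed.

Lemma swp_r p q : swp p q q = p.
Proof. unfold swp. repeat destruct Nat.eq_dec; congruence. Qed.

Lemma swp_o p q r : r <> p -> r <> q -> swp p q r = r.
Proof. intros. unfold swp. repeat destruct Nat.eq_dec; congruence. Qed.

Lemma swp_conj f p q n : (forall x y, f x = f y -> x = y) ->
  f (swp p q n) = swp (f p) (f q) (f n).
Proof.
  intro Hf. unfold swp at 1.
  destruct (Nat.eq_dec n p). subst. rewrite swp_l. auto.
  destruct (Nat.eq_dec n q). subst. rewrite swp_r. auto.
  rewrite swp_o; auto; intro E; apply Hf in E; auto.
Qed.

Lemma swp_dbl_even p q n : swp (2*p) (2*q) (2*n) = 2 * swp p q n.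
Proof. unfold swp. repeat destruct Nat.eq_dec; lia. Qed.

Lemma swp_dbl_odd p q m : Nat.odd m = true -> swp (2*p) (2*q) m = m.
Proof.
  intro H. apply swp_o; intro E; subst; rewrite Nat.odd_even in H; discriminate.
Qed.

Lemma swp_dbl_parity p q m : Nat.odd (swp (2*p) (2*q) m) = Nat.odd m.
Proof.
  unfold swp. destruct Nat.eq_dec; subst. rewrite !Nat.odd_even; auto.
  destruct Nat.eq_dec; subst; rewrite ?Nat.odd_even; auto.
Qed.

(* Free points are encoded as even names; bound points get fresh odd names. *)
Definition dbl (n : nat) := 2 * n.

Definition enc := ren dbl.

Lemma le_list_max l x : In x l -> x <= list_max l.
Proof. intro H. exact (proj1 (Forall_forall _ l) (proj1 (list_max_le l _) (le_n _)) x H). Qed.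

Lemma fresh_odd (l : list nat) : exists k, ~ In (2*k+1) l.
Proof. exists (list_max l). intro H. apply le_list_max in H. lia. Qed.

Lemma fresh_nat (l : list nat) : exists k, ~ In k l.
Proof. exists (S (list_max l)). intro H. apply le_list_max in H. lia. Qed.

Definition odd_disjoint (La Lb : list sub) : Prop :=
  forall n, In n (names La) -> Nat.odd n = true -> ~ In n (names Lb).

Inductive Flat : state -> list sub -> Prop :=
| flat_sub x : Flat (Sub x) [enc x]
| flat_par a b La Lb : Flat a La -> Flat b Lb -> odd_disjoint La Lb -> Flat (Par a b) (La ++ Lb)
| flat_nu p a La k : Flat a La -> ~ In (2*k+1) (names La) ->
    Flat (Nu p a) (map (ren (swp (2*p) (2*k+1))) La).

Lemma odd_disjoint_sym La Lb : odd_disjoint La Lb -> odd_disjoint Lb La.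
Proof. unfold odd_disjoint. intros H n H1 H2 H3. exact (H n H3 H2 H1). Qed.

Lemma odd_disjoint_perm La Lb La' Lb' : Permutation La La' -> Permutation Lb Lb' ->
  odd_disjoint La Lb -> odd_disjoint La' Lb'.
Proof.
  unfold odd_disjoint. intros P1 P2 H n H1 H2 H3.
  apply (H n); auto.
  - apply (Permutation_in _ (Permutation_sym (Permutation_names _ _ P1))); auto.
  - apply (Permutation_in _ (Permutation_sym (Permutation_names _ _ P2))); auto.
Qed.

Lemma odd_disjoint_app_l La Lb Lc : odd_disjoint (La ++ Lb) Lc <-> odd_disjoint La Lc /\ odd_disjoint Lb Lc.
Proof.
  unfold odd_disjoint; split.
  - intro H; split; intros n H1; apply H; rewrite names_app; apply in_or_app; auto.
  - intros [H1 H2] n Hn. rewrite names_app in Hn. apply in_app_or in Hn as [Hn|Hn]; auto.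
Qed.

Lemma odd_disjoint_app_r La Lb Lc : odd_disjoint La (Lb ++ Lc) <-> odd_disjoint La Lb /\ odd_disjoint La Lc.
Proof.
  unfold odd_disjoint; split.
  - intro H; split; intros n H1 H2 H3; apply (H n H1 H2); rewrite names_app; apply in_or_app; auto.
  - intros [H1 H2] n Hn Ho Hc. rewrite names_app in Hc. apply in_app_or in Hc as [Hc|Hc].
    + exact (H1 n Hn Ho Hc).
    + exact (H2 n Hn Ho Hc).
Qed.

Lemma flat_nu_eq p a La k L : Flat a La -> ~ In (2*k+1) (names La) ->
  L = map (ren (swp (2*p) (2*k+1))) La -> Flat (Nu p a) L.
Proof. intros; subst; constructor; auto. Qed.

Lemma flat_free a L : Flat a L -> forall p, In (2*p) (names L) -> In p (fn a).
Proof.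
  induction 1; intros q Hq; simpl.
  - unfold enc in Hq. unfold names in Hq. simpl in Hq. rewrite app_nil_r, sub_fn_ren in Hq.
    apply in_map_iff in Hq as [m [E Hm]]. unfold dbl in E. assert (m = q) by lia. subst; simpl; auto.
  - rewrite names_app in Hq. apply in_or_app. apply in_app_or in Hq as [Hq|Hq]; auto.
  - rewrite names_map in Hq. apply in_map_iff in Hq as [m [E Hm]].
    unfold swp in E. destruct (Nat.eq_dec m (2*p)); [lia|].
    destruct (Nat.eq_dec m (2*k+1)); [subst; contradiction|]. subst m.
    apply in_in_remove; try lia; auto.
Qed.

Lemma flat_swap a L : Flat a L -> forall p q, Flat (swap p q a) (map (ren (swp (2*p) (2*q))) L).
Proof.
  induction 1; intros p' q'; cbn [swap map].
  - replace (ren (swp (2 * p') (2 * q')) (enc x)) with (enc (swap_sub p' q' x)); [constructor|].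
    unfold enc. rewrite swap_sub_ren, !ren_comp. apply ren_ext. intros. unfold dbl. rewrite swp_dbl_even. auto.
  - rewrite map_app. constructor; auto.
    unfold odd_disjoint in *. intros n Hn Ho Hc. rewrite names_map in Hn, Hc.
    apply in_map_iff in Hn as [m [E Hm]]. subst n. rewrite swp_dbl_parity in Ho.
    rewrite swp_dbl_odd in Hc by auto. apply in_map_iff in Hc as [m' [E' Hm']].
    rewrite <- (swp_dbl_odd p' q' m) in E' by auto. apply swp_inj in E'. subst. eapply H1; eauto.
  - rewrite map_ren_comp.
    replace (map (ren (fun n => swp (2 * p') (2 * q') (swp (2 * p) (2 * k + 1) n))) La)
      with (map (ren (swp (2 * swp p' q' p) (2*k+1))) (map (ren (swp (2 * p') (2 * q'))) La)).
    + constructor; auto. rewrite names_map. intro Hc. apply in_map_iff in Hc as [m [E Hm]].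
      rewrite <- (swp_dbl_odd p' q' (2*k+1)) in E by apply Nat.odd_odd. apply swp_inj in E. subst. contradiction.
    + rewrite map_ren_comp. apply map_ren_ext. intros n _.
      rewrite (swp_conj (swp (2*p') (2*q'))) by apply swp_inj.
      rewrite swp_dbl_even, (swp_dbl_odd p' q' (2*k+1)) by apply Nat.odd_odd. reflexivity.
Qed.

Lemma swap_swap p q a : swap p q (swap p q a) = a.
Proof.
  induction a; simpl; try congruence.
  - rewrite swp_invol, IHa; auto.
  - rewrite !swap_sub_ren, ren_comp. f_equal. apply ren_id. intros. apply swp_invol.
Qed.

Lemma names_swp_img p k L : In (2*p) (names L) -> In (2*k+1) (names (map (ren (swp (2*p) (2*k+1))) L)).
Proof. intro H. rewrite names_map. apply in_map_iff. exists (2*p). split; auto. apply swp_l. Qed.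

Lemma not_in_img p k L n : ~ In n (names L) -> n <> 2*p -> n <> 2*k+1 ->
  ~ In n (names (map (ren (swp (2*p) (2*k+1))) L)).
Proof.
  intros H1 H2 H3 H. rewrite names_map in H. apply in_map_iff in H as [m [E Hm]].
  unfold swp in E. destruct Nat.eq_dec; subst; [congruence|].
  destruct Nat.eq_dec; subst; [congruence|]. contradiction.
Qed.

Lemma odd_img p k L n : In n (names (map (ren (swp (2*p) (2*k+1))) L)) -> Nat.odd n = true ->
  n = 2*k+1 \/ (In n (names L) /\ n <> 2*k+1).
Proof.
  intros H Ho. rewrite names_map in H. apply in_map_iff in H as [m [E Hm]].
  unfold swp in E. destruct Nat.eq_dec; subst; auto.
  destruct Nat.eq_dec; subst. rewrite Nat.odd_even in Ho; discriminate. auto.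
Qed.

Lemma flat_extr_lr p a b L : ~ In p (fn b) -> Flat (Par (Nu p a) b) L -> Flat (Nu p (Par a b)) L.
Proof.
  intros Hp H. inversion H; subst. inversion H2; subst. rename La0 into La.
  assert (Hb2 : ~ In (2*p) (names Lb)) by (intro; apply Hp; eapply flat_free; eauto).
  destruct (in_dec Nat.eq_dec (2*p) (names La)) as [Hin|Hin].
  - assert (HK : ~ In (2*k+1) (names Lb)).
    { apply (H5 (2*k+1)). apply names_swp_img; auto. apply Nat.odd_odd. }
    apply (flat_nu_eq p (Par a b) (La ++ Lb) k).
    + constructor; auto. intros n Hn Ho Hc. apply (H5 n); auto.
      rewrite names_map. apply in_map_iff. exists n; split; auto.
      apply swp_o. intro; subst; rewrite Nat.odd_even in Ho; discriminate.
      intro; subst; contradiction.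
    + rewrite names_app. intro Hc; apply in_app_or in Hc as [Hc|Hc]; contradiction.
    + rewrite map_app. f_equal. symmetry. apply map_ren_id. intros n Hn. apply swp_o; intro; subst; contradiction.
  - destruct (fresh_odd (names (La ++ Lb))) as [k' Hk'].
    apply (flat_nu_eq p (Par a b) (La ++ Lb) k').
    + constructor; auto. intros n Hn Ho Hc. apply (H5 n); auto.
      rewrite names_map. apply in_map_iff. exists n; split; auto.
      apply swp_o. intro; subst; contradiction. intro; subst; contradiction.
    + auto.
    + rewrite map_app. rewrite !map_ren_id; auto.
      * intros n Hn. apply swp_o; intro; subst; [contradiction|]. apply Hk'.
        rewrite names_app; apply in_or_app; auto.
      * intros n Hn. apply swp_o; intro; subst; [contradiction|]. apply Hk'.
        rewrite names_app; apply in_or_app; auto.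
      * intros n Hn. apply swp_o; intro; subst; contradiction.
Qed.

Lemma flat_extr_rl p a b L : ~ In p (fn b) -> Flat (Nu p (Par a b)) L -> Flat (Par (Nu p a) b) L.
Proof.
  intros Hp H. inversion H; subst. inversion H2; subst. rename La0 into La.
  assert (Hb2 : ~ In (2*p) (names Lb)) by (intro; apply Hp; eapply flat_free; eauto).
  rewrite names_app in H4.
  assert (HKa : ~ In (2*k+1) (names La)) by (intro; apply H4; apply in_or_app; auto).
  assert (HKb : ~ In (2*k+1) (names Lb)) by (intro; apply H4; apply in_or_app; auto).
  rewrite map_app. rewrite (map_ren_id _ Lb).
  - constructor; auto. constructor; auto.
    intros n Hn Ho. apply odd_img in Hn as [E|[Hn E]]; auto. subst; auto.
  - intros n Hn. apply swp_o; intro; subst; contradiction.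
Qed.

Lemma flat_nu_comm p q a L : Flat (Nu p (Nu q a)) L -> Flat (Nu q (Nu p a)) L.
Proof.
  intro H. destruct (Nat.eq_dec p q). subst; auto.
  inversion H; subst. inversion H2; subst. rename La0 into La. rename k0 into k2. rename k into k1.
  destruct (Nat.eq_dec k1 k2) as [Ek|Ek].
  - subst k2.
    assert (Hq : ~ In (2*q) (names La)) by (intro Hc; apply H4; apply names_swp_img; auto).
    assert (Eq : map (ren (swp (2 * q) (2 * k1 + 1))) La = La).
    { apply map_ren_id. intros m Hm. apply swp_o; intro; subst; contradiction. }
    rewrite Eq in *.
    destruct (fresh_odd (names (map (ren (swp (2 * p) (2 * k1 + 1))) La))) as [k3 Hk3].
    apply (flat_nu_eq q (Nu p a) (map (ren (swp (2 * p) (2 * k1 + 1))) La) k3); auto.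
    + constructor; auto.
    + symmetry. apply map_ren_id. intros m Hm. apply swp_o; intro; subst; [|contradiction].
      revert Hm. apply not_in_img; auto; lia.
  - assert (HK1 : ~ In (2*k1+1) (names La)).
    { intro Hc; apply H4. rewrite names_map. apply in_map_iff. exists (2*k1+1). split; auto.
      apply swp_o; lia. }
    apply (flat_nu_eq q (Nu p a) (map (ren (swp (2 * p) (2 * k1 + 1))) La) k2).
    + constructor; auto.
    + apply not_in_img; auto; lia.
    + rewrite !map_ren_comp. apply map_ren_ext. intros x _. unfold swp.
      repeat (destruct Nat.eq_dec); lia.
Qed.

Lemma flat_alpha_lr p q a L : ~ In q (fn (Nu p a)) -> Flat (Nu p a) L -> Flat (Nu q (swap p q a)) L.
Proof.
  intros Hq H. inversion H; subst.
  apply (flat_nu_eq q _ (map (ren (swp (2*p) (2*q))) La) k).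
  - apply flat_swap; auto.
  - rewrite names_map. intro Hc. apply in_map_iff in Hc as [m [E Hm]].
    rewrite <- (swp_dbl_odd p q (2*k+1)) in E by apply Nat.odd_odd. apply swp_inj in E. subst. contradiction.
  - rewrite map_ren_comp. destruct (Nat.eq_dec p q).
    + subst. apply map_ren_ext. intros. rewrite swp_same. auto.
    + assert (~ In (2*q) (names La)).
      { intro Hc. apply Hq. simpl. apply in_in_remove; auto. eapply flat_free; eauto. }
      apply map_ren_ext. intros m Hm. unfold swp. repeat destruct Nat.eq_dec; subst; try lia; auto; contradiction.
Qed.

Lemma flat_alpha_rl p q a L : ~ In q (fn (Nu p a)) -> Flat (Nu q (swap p q a)) L -> Flat (Nu p a) L.
Proof.
  intros Hq H. inversion H; subst. rename La into Lq.
  pose proof (flat_swap _ _ H2 p q) as Ha. rewrite swap_swap in Ha.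
  apply (flat_nu_eq p _ _ k _ Ha).
  - rewrite names_map. intro Hc. apply in_map_iff in Hc as [m [E Hm]].
    rewrite <- (swp_dbl_odd p q (2*k+1)) in E by apply Nat.odd_odd. apply swp_inj in E. subst. contradiction.
  - rewrite map_ren_comp. destruct (Nat.eq_dec p q).
    + subst. apply map_ren_ext. intros. rewrite swp_same. auto.
    + assert (~ In (2*p) (names Lq)).
      { intro Hc. apply Hq. simpl. apply in_in_remove; auto. eapply flat_free; eauto.
        rewrite names_map. apply in_map_iff. exists (2*p). split; auto. apply swp_l. }
      apply map_ren_ext. intros m Hm. unfold swp. repeat destruct Nat.eq_dec; subst; try lia; auto; contradiction.
Qed.

Lemma flat_scong a b : scong a b ->
  (forall L, Flat a L -> exists L', Flat b L' /\ Permutation L L') /\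
  (forall L, Flat b L -> exists L', Flat a L' /\ Permutation L L').
Proof.
  induction 1.
  - split; eauto.
  - tauto.
  - destruct IHscong1 as [H1 H2], IHscong2 as [H3 H4]. split; intros L HL.
    + destruct (H1 _ HL) as [L1 [HL1 P1]]. destruct (H3 _ HL1) as [L2 [HL2 P2]]. eauto using Permutation_trans.
    + destruct (H4 _ HL) as [L1 [HL1 P1]]. destruct (H2 _ HL1) as [L2 [HL2 P2]]. eauto using Permutation_trans.
  - destruct IHscong1 as [H1 H2], IHscong2 as [H3 H4]. split; intros L HL; inversion HL; subst.
    + destruct (H1 _ H7) as [La' [? ?]]. destruct (H3 _ H8) as [Lb' [? ?]].
      exists (La' ++ Lb'). split. constructor; auto. eapply odd_disjoint_perm; eauto. apply Permutation_app; auto.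
    + destruct (H2 _ H7) as [La' [? ?]]. destruct (H4 _ H8) as [Lb' [? ?]].
      exists (La' ++ Lb'). split. constructor; auto. eapply odd_disjoint_perm; eauto. apply Permutation_app; auto.
  - destruct IHscong as [H1 H2]. split; intros L HL; inversion HL as [| |? ? La k HLa HK]; subst.
    + destruct (H1 _ HLa) as [L' [HL' HP]]. exists (map (ren (swp (2*p) (2*k+1))) L'); split. apply flat_nu; auto.
      intro Hc; apply HK. apply (Permutation_in _ (Permutation_sym (Permutation_names _ _ HP))); auto.
      apply Permutation_map; auto.
    + destruct (H2 _ HLa) as [L' [HL' HP]]. exists (map (ren (swp (2*p) (2*k+1))) L'); split. apply flat_nu; auto.
      intro Hc; apply HK. apply (Permutation_in _ (Permutation_sym (Permutation_names _ _ HP))); auto.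
      apply Permutation_map; auto.
  - split; intros L HL; inversion HL; subst; eexists; (split; [constructor; eauto; apply odd_disjoint_sym; auto|apply Permutation_app_comm]).
  - split; intros L HL; inversion HL as [|a0 b0 La Lb HLa HLb HD|]; subst.
    + inversion HLa as [|a1 b1 La1 Lb1 H1 H2 HD1|]; subst. apply odd_disjoint_app_l in HD as [D1 D2].
      exists (La1 ++ Lb1 ++ Lb). split. constructor; auto. constructor; auto.
      apply odd_disjoint_app_r; auto. rewrite app_assoc; auto.
    + inversion HLb as [|a1 b1 La1 Lb1 H1 H2 HD1|]; subst. apply odd_disjoint_app_r in HD as [D1 D2].
      exists ((La ++ La1) ++ Lb1). split. constructor; auto. constructor; auto.
      apply odd_disjoint_app_l; auto. rewrite app_assoc; auto.
  - split; intros L HL; exists L; split; auto. apply flat_extr_lr; auto. apply flat_extr_rl; auto.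
  - split; intros L HL; exists L; split; auto; apply flat_nu_comm; auto.
  - split; intros L HL; exists L; split; auto. apply flat_alpha_lr; auto. eapply flat_alpha_rl; eauto.
Qed.

(* x1 | ... | xn as a state (the empty case is a dummy, never used). *)
Fixpoint par_subs (l : list sub) : state :=
  match l with
  | [] => Sub (SFree 0)
  | [x] => Sub x
  | x :: l' => Par (Sub x) (par_subs l')
  end.

Definition binds (s : sync) : list sub := map (fun pa => SBind (fst pa) (snd pa)) s.

Inductive BaseRule : list sub -> list sub -> Prop :=
| base_I p q c : BaseRule [SBind p (AIn c); SBind q (AOut c); SFree c] [SCand p; SCand q; SMatch c p q]
| base_IIi p s : In p (dom s) -> BaseRule [SCand p; SOpen s] [SClosed s; SSelect s p]
| base_IIii p s : In p (dom s) -> BaseRule [SCand p; SClosed s] [SClosed s; SReject p]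
| base_IIIi s s' p q c : BaseRule [SSelect s p; SSelect s' q; SMatch c p q] [SDone s p; SDone s' q; SFree c]
| base_IIIii s p q c : BaseRule [SSelect s p; SReject q; SMatch c p q] [SRetry s; SFree c]
| base_IIIiii s p q c : BaseRule [SReject p; SSelect s q; SMatch c p q] [SRetry s; SFree c]
| base_IIIiv p q c : BaseRule [SReject p; SReject q; SMatch c p q] [SFree c]
| base_IVi s p a : In (p, a) s -> BaseRule [SDone s p] [SAct a].

Definition FlatRule (X : list nat) (lhs rhs : list sub) : Prop :=
  BaseRule lhs rhs \/
  exists s s', lhs = [SRetry s] /\ rhs = SOpen s' :: binds s' /\ map snd s' = map snd s /\
    (NoDup (dom s) -> NoDup (dom s')) /\ (forall n, In n (dom s') -> ~ In n X).

(* One rule instance rewritten inside a multiset; X lists names the reopened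
   points must avoid. *)
Definition FlatStep (X : list nat) (L L' : list sub) : Prop :=
  exists lhs rhs rest, FlatRule (X ++ names rest) lhs rhs /\ Permutation L (lhs ++ rest) /\ Permutation L' (rhs ++ rest).

Lemma base_rule_step l r : BaseRule l r -> mstep (par_subs l) (par_subs r).
Proof. destruct 1; simpl; constructor; auto. Qed.

Lemma in_dom_ren f p s : In p (dom s) -> In (f p) (dom (ren_sync f s)).
Proof. intro. rewrite dom_ren. apply in_map; auto. Qed.

Lemma in_ren_sync f p a s : In (p, a) s -> In (f p, a) (ren_sync f s).
Proof. intro. unfold ren_sync. apply in_map_iff. exists (p,a); auto. Qed.

Lemma base_rule_ren f l r : BaseRule l r -> BaseRule (map (ren f) l) (map (ren f) r).
Proof.
  destruct 1; simpl; constructor; auto using in_dom_ren, in_ren_sync.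
Qed.

Lemma base_rule_names l r : BaseRule l r -> incl (names r) (names l).
Proof.
  destruct 1; unfold names; simpl; intros n Hn; repeat (simpl in *; rewrite ?app_nil_r, ?in_app_iff in * ); tauto.
Qed.

Lemma base_rule_ne l r : BaseRule l r -> l <> [] /\ r <> [].
Proof. destruct 1; split; discriminate. Qed.

Lemma flat_rule_mono X Y l r : FlatRule X l r -> incl Y X -> FlatRule Y l r.
Proof.
  intros [H|[s [s' [E1 [E2 [E3 [E4 E5]]]]]]] Hi; [left; auto|right].
  exists s, s'. repeat split; auto. intros n Hn Hc. apply (E5 n Hn). apply Hi; auto.
Qed.

Lemma binds_ren f s : map (ren f) (binds s) = binds (ren_sync f s).
Proof. unfold binds, ren_sync. rewrite !map_map. reflexivity. Qed.

Lemma flat_rule_ren f X l r : (forall x y, f x = f y -> x = y) -> FlatRule X l r ->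
  FlatRule (map f X) (map (ren f) l) (map (ren f) r).
Proof.
  intros Hf [H|[s [s' [E1 [E2 [E3 [E4 E5]]]]]]]; [left; apply base_rule_ren; auto|right]. subst.
  exists (ren_sync f s), (ren_sync f s'). simpl. rewrite binds_ren. repeat split; auto.
  - rewrite !snd_ren; auto.
  - rewrite !dom_ren. intro H. apply NoDup_map_inv in H. apply FinFun.Injective_map_NoDup; auto.
  - intros n Hn Hc. rewrite dom_ren in Hn. apply in_map_iff in Hn as [m [E Hm]]. subst.
    apply in_map_iff in Hc as [m' [E Hm']]. apply Hf in E. subst. apply (E5 m); auto.
Qed.

Lemma flat_step_perm X L1 L2 L1' L2' : FlatStep X L1 L2 -> Permutation L1 L1' ->
  Permutation L2 L2' -> FlatStep X L1' L2'.
Proof.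
  intros [lhs [rhs [rest [H1 [H2 H3]]]]] P1 P2. exists lhs, rhs, rest. repeat split; auto.
  eapply Permutation_trans; [apply Permutation_sym; eauto|auto].
  eapply Permutation_trans; [apply Permutation_sym; eauto|auto].
Qed.

Lemma flat_step_mono X Y L L' : FlatStep X L L' -> incl Y X -> FlatStep Y L L'.
Proof.
  intros [lhs [rhs [rest [H1 [H2 H3]]]]] Hi. exists lhs, rhs, rest. repeat split; auto.
  eapply flat_rule_mono; eauto. intros n Hn. apply in_app_iff in Hn as [Hn|Hn]; apply in_app_iff; auto.
Qed.

Lemma flat_step_ren f X L L' : (forall x y, f x = f y -> x = y) -> FlatStep X L L' ->
  FlatStep (map f X) (map (ren f) L) (map (ren f) L').
Proof.
  intros Hf [lhs [rhs [rest [H1 [H2 H3]]]]]. exists (map (ren f) lhs), (map (ren f) rhs), (map (ren f) rest).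
  repeat split.
  - rewrite names_map, <- map_app. apply flat_rule_ren; auto.
  - rewrite <- map_app. apply Permutation_map; auto.
  - rewrite <- map_app. apply Permutation_map; auto.
Qed.

Lemma flat_step_app X L L' Lb : FlatStep (X ++ names Lb) L L' -> FlatStep X (L ++ Lb) (L' ++ Lb).
Proof.
  intros [lhs [rhs [rest [H1 [H2 H3]]]]]. exists lhs, rhs, (rest ++ Lb). repeat split.
  - eapply flat_rule_mono; eauto. intros n Hn. rewrite names_app in Hn. rewrite !in_app_iff in *. tauto.
  - rewrite app_assoc. apply Permutation_app_tail; auto.
  - rewrite app_assoc. apply Permutation_app_tail; auto.
Qed.

Lemma names_enc_even l n : In n (names (map enc l)) -> Nat.odd n = false.
Proof.
  intro H. unfold enc in H. rewrite names_map in H. apply in_map_iff in H as [m [E _]]. subst.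
  unfold dbl. apply Nat.odd_even.
Qed.

Lemma names_enc_dbl l b : In (2*b) (names (map enc l)) -> In b (names l).
Proof.
  unfold enc. rewrite names_map. intro H. apply in_map_iff in H as [x [E Hx]].
  unfold dbl in E. replace b with x by lia. auto.
Qed.

Lemma flat_par_subs_inv l La : l <> [] -> Flat (par_subs l) La -> La = map enc l.
Proof.
  revert La; induction l as [|x l IH]; intros La Hne H; [congruence|].
  destruct l as [|y l].
  - simpl in H. inversion H; subst; auto.
  - change (par_subs (x :: y :: l)) with (Par (Sub x) (par_subs (y :: l))) in H.
    inversion H; subst. inversion H2; subst. rewrite (IH Lb ltac:(discriminate) H3). reflexivity.
Qed.

Lemma flat_par_subs l : l <> [] -> Flat (par_subs l) (map enc l).
Proof.
  induction l as [|x l IH]; intros Hne; [congruence|].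
  destruct l as [|y l].
  - constructor.
  - change (par_subs (x :: y :: l)) with (Par (Sub x) (par_subs (y :: l))).
    change (map enc (x :: y :: l)) with ([enc x] ++ map enc (y :: l)). constructor.
    + constructor.
    + apply IH. discriminate.
    + intros n Hn Ho. apply (names_enc_even [x]) in Hn. congruence.
Qed.

Definition FreshNames (X : list nat) (La La' : list sub) : Prop :=
  forall n, In n (names La') -> In n (names La) \/ (Nat.odd n = true /\ ~ In n X).

Lemma mstep_flat_base l r X La : BaseRule l r -> Flat (par_subs l) La ->
  exists La', Flat (par_subs r) La' /\ FlatStep X La La' /\ FreshNames X La La'.
Proof.
  intros HR HI. destruct (base_rule_ne _ _ HR) as [N1 N2].
  apply flat_par_subs_inv in HI; auto. subst. exists (map enc r). repeat split.
  - apply flat_par_subs; auto.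
  - exists (map enc l), (map enc r), []. repeat split; rewrite ?app_nil_r; auto.
    left. apply base_rule_ren; auto.
  - intros n Hn. left. unfold enc in *. rewrite names_map in *. apply in_map_iff in Hn as [m [E Hm]].
    subst. apply in_map. apply (base_rule_names _ _ HR); auto.
Qed.

Lemma flat_nus D t Lt X : Flat t Lt -> exists f, (forall x y, f x = f y -> x = y) /\
  Flat (nus D t) (map (ren f) Lt) /\
  (forall n, In n (names Lt) ->
     (In n (map dbl D) /\ Nat.odd (f n) = true /\ ~ In (f n) X /\ ~ In (f n) (names Lt)) \/
     (~ In n (map dbl D) /\ f n = n)).
Proof.
  intro HI. induction D as [|d D IH].
  - exists (fun n => n). repeat split; auto. simpl. rewrite map_ren_id; auto.
  - destruct IH as [f' [Hinj [HI' Hp]]].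
    destruct (fresh_odd (names (map (ren f') Lt) ++ X ++ names Lt)) as [k Hk].
    rewrite !in_app_iff in Hk.
    exists (fun n => swp (2*d) (2*k+1) (f' n)). repeat split.
    + intros x y E. apply swp_inj in E. auto.
    + simpl. apply (flat_nu_eq d _ (map (ren f') Lt) k); auto. rewrite map_ren_comp. auto.
    + intros n Hn. destruct (Hp n Hn) as [[A1 [A2 [A3 A4]]]|[A1 A2]].
      * left. rewrite swp_o. repeat split; auto. simpl; auto.
        -- intro E. rewrite E, Nat.odd_even in A2. discriminate.
        -- intro E. apply Hk. left. rewrite <- E. rewrite names_map. apply in_map. auto.
      * rewrite A2. destruct (Nat.eq_dec n (2*d)).
        -- subst. left. rewrite swp_l. repeat split; simpl; auto. apply Nat.odd_odd.
        -- right. rewrite swp_o; auto. split; auto. simpl. intros [E|E]; auto.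
           intro E; subst; auto.
Qed.

Lemma parl_par_subs x l : parl (Sub x) (map Sub l) = par_subs (x :: l).
Proof.
  revert x; induction l as [|y l IH]; intro x; auto. simpl. rewrite IH. destruct l; reflexivity.
Qed.

Lemma names_binds s : names (binds s) = dom s.
Proof. induction s as [|[p a] s IH]; auto. simpl. unfold names in *. simpl. rewrite IH. auto. Qed.

Lemma flat_reopen s X : exists f, FinFun.Injective f /\
  Flat (nus (dom s) (parl (Sub (SOpen s)) (bindings s))) (map (ren f) (map enc (SOpen s :: binds s))) /\
  (forall n, In n (names (map enc (SOpen s :: binds s))) -> Nat.odd (f n) = true /\ ~ In (f n) X).
Proof.
  assert (Eb : bindings s = map Sub (binds s)) by (unfold bindings, binds; rewrite map_map; auto).
  rewrite Eb, parl_par_subs.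
  destruct (flat_nus (dom s) _ _ X (flat_par_subs (SOpen s :: binds s) ltac:(discriminate)))
    as [f [Hinj [HI Hp]]].
  assert (Hdom : forall n, In n (names (map enc (SOpen s :: binds s))) -> In n (map dbl (dom s))).
  { intros n Hn. unfold enc in Hn. rewrite names_map in Hn.
    change (names (SOpen s :: binds s)) with (dom s ++ names (binds s)) in Hn.
    rewrite names_binds in Hn. apply in_map_iff in Hn as [m [E Hm]]. subst.
    apply in_map. apply in_app_or in Hm as [?|?]; auto. }
  exists f. split; [|split]; [auto..|].
  intros n Hn. destruct (Hp n Hn) as [[_ [A2 [A3 _]]]|[A1 _]]; [auto|].
  exfalso. apply A1, Hdom; auto.
Qed.

Lemma mstep_flat_retry s X La : Flat (Sub (SRetry s)) La ->
  exists La', Flat (nus (dom s) (parl (Sub (SOpen s)) (bindings s))) La' /\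
    FlatStep X La La' /\ FreshNames X La La'.
Proof.
  intro HI. inversion HI; subst.
  destruct (flat_reopen s X) as [f [Hinj [HI' Hf]]].
  exists (map (ren f) (map enc (SOpen s :: binds s))). repeat split; [exact HI'| |].
  - exists [enc (SRetry s)], (map (ren f) (map enc (SOpen s :: binds s))), []. rewrite !app_nil_r.
    repeat split; auto. right. exists (ren_sync dbl s), (ren_sync f (ren_sync dbl s)).
    repeat split.
    + simpl. unfold enc. simpl. rewrite binds_ren, binds_ren. reflexivity.
    + rewrite !snd_ren. auto.
    + rewrite !dom_ren. intro H. apply FinFun.Injective_map_NoDup; auto.
    + intros n Hn Hc. rewrite !dom_ren in Hn. apply in_map_iff in Hn as [m [E Hm]]. subst.
      assert (Hm' : In m (names (map enc (SOpen s :: binds s)))).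
      { unfold names. simpl. apply in_or_app. left. unfold enc. simpl. rewrite dom_ren. auto. }
      apply (proj2 (Hf m Hm')). simpl in Hc. auto.
  - intros n Hn. right. rewrite names_map in Hn. apply in_map_iff in Hn as [m [E Hm]]. subst. apply Hf; auto.
Qed.

Definition StepsFlat (a a' : state) : Prop :=
  forall X La, Flat a La -> exists La', Flat a' La' /\ FlatStep X La La' /\ FreshNames X La La'.

Lemma mstep_flat_par a a' b : StepsFlat a a' -> StepsFlat (Par a b) (Par a' b).
Proof.
  intros IH X La HI. inversion HI as [|a0 b0 La1 Lb HLa HLb HD|]; subst.
  destruct (IH (X ++ names Lb) La1 HLa) as [La1' [H1 [H2 H3]]].
  exists (La1' ++ Lb). repeat split.
  - constructor; auto. intros n Hn Ho Hc. destruct (H3 n Hn) as [Hn'|[_ Hn']].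
    + exact (HD n Hn' Ho Hc).
    + apply Hn'. apply in_app_iff; auto.
  - apply flat_step_app; auto.
  - intros n Hn. rewrite names_app in *. apply in_app_iff in Hn as [Hn|Hn].
    + destruct (H3 n Hn) as [Hn'|[Ho Hn']]; [left; apply in_app_iff; auto|right; split; auto].
      intro; apply Hn'; apply in_app_iff; auto.
    + left; apply in_app_iff; auto.
Qed.

(* Under a restriction the inner step is asked to avoid the swapped X and the
   odd name chosen for the bound point; swapping back gives the outer step. *)
Lemma mstep_flat_nu p a a' : StepsFlat a a' -> StepsFlat (Nu p a) (Nu p a').
Proof.
  intros IH X La HI. inversion HI as [| |p0 a0 La1 k HLa HK]; subst.
  set (sg := swp (2*p) (2*k+1)).
  destruct (IH (map sg X ++ [2*k+1]) La1 HLa) as [La1' [H1 [H2 H3]]].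
  assert (HK' : ~ In (2*k+1) (names La1')).
  { intro Hc. destruct (H3 _ Hc) as [Hc'|[_ Hc']]; auto. apply Hc'. apply in_app_iff; simpl; auto. }
  exists (map (ren sg) La1'). repeat split.
  - constructor; auto.
  - apply (flat_step_mono (map sg (map sg X ++ [2*k+1]))).
    + apply flat_step_ren; auto. intros; eapply swp_inj; eauto.
    + intros x Hx. rewrite map_app. apply in_app_iff. left. rewrite map_map. apply in_map_iff.
      exists x. split; auto. unfold sg. apply swp_invol.
  - intros n Hn. rewrite names_map in Hn. apply in_map_iff in Hn as [m [E Hm]]. subst n.
    destruct (H3 m Hm) as [Hm'|[Ho Hm']].
    + left. rewrite names_map. apply in_map; auto.
    + assert (m <> 2*k+1) by (intro; subst; apply Hm'; apply in_app_iff; simpl; auto).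
      assert (m <> 2*p) by (intro; subst; rewrite Nat.odd_even in Ho; discriminate).
      unfold sg. rewrite swp_o by auto. right. split; auto. intro Hx. apply Hm'.
      apply in_app_iff. left. apply in_map_iff. exists m. split; auto. apply swp_o; auto.
Qed.

Lemma mstep_flat_scong a a1 a2 a' : scong a a1 -> scong a2 a' ->
  StepsFlat a1 a2 -> StepsFlat a a'.
Proof.
  intros H H1 IH X La HI.
  destruct (flat_scong _ _ H) as [S1 _]. destruct (S1 _ HI) as [L1 [HL1 P1]].
  destruct (IH X L1 HL1) as [L2 [HL2 [HA HF]]].
  destruct (flat_scong _ _ H1) as [S3 _]. destruct (S3 _ HL2) as [L3 [HL3 P3]].
  exists L3. repeat split; auto.
  - eapply flat_step_perm; eauto. apply Permutation_sym; auto.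
  - intros n Hn. apply (Permutation_in _ (Permutation_sym (Permutation_names _ _ P3))) in Hn.
    destruct (HF n Hn) as [Hn'|Hn']; auto. left.
    apply (Permutation_in _ (Permutation_sym (Permutation_names _ _ P1))); auto.
Qed.

Lemma mstep_flat a a' : mstep a a' -> StepsFlat a a'.
Proof.
  induction 1; intros X La HI.
  - exact (mstep_flat_base _ _ X La (base_I p q c) HI).
  - exact (mstep_flat_base _ _ X La (base_IIi p s H) HI).
  - exact (mstep_flat_base _ _ X La (base_IIii p s H) HI).
  - exact (mstep_flat_base _ _ X La (base_IIIi s s' p q c) HI).
  - exact (mstep_flat_base _ _ X La (base_IIIii s p q c) HI).
  - exact (mstep_flat_base _ _ X La (base_IIIiii s p q c) HI).
  - exact (mstep_flat_base _ _ X La (base_IIIiv p q c) HI).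
  - exact (mstep_flat_base _ _ X La (base_IVi s p a H) HI).
  - apply mstep_flat_retry; auto.
  - exact (mstep_flat_par a a' b IHmstep X La HI).
  - exact (mstep_flat_nu p a a' IHmstep X La HI).
  - exact (mstep_flat_scong a a1 a2 a' H H1 IHmstep X La HI).
Qed.

Lemma remove_map_swp p q r l : remove Nat.eq_dec (swp p q r) (map (swp p q) l) = map (swp p q) (remove Nat.eq_dec r l).
Proof.
  induction l as [|x l IH]; simpl; auto.
  destruct (Nat.eq_dec (swp p q r) (swp p q x)) as [E|E]; destruct (Nat.eq_dec r x) as [E'|E']; subst.
  - auto.
  - apply swp_inj in E. contradiction.
  - contradiction.
  - simpl. rewrite IH. auto.
Qed.

Lemma fn_swap p q a : fn (swap p q a) = map (swp p q) (fn a).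
Proof.
  induction a; simpl.
  - rewrite IHa1, IHa2, map_app. auto.
  - rewrite IHa. apply remove_map_swp.
  - rewrite swap_sub_ren, sub_fn_ren. auto.
Qed.

Lemma fn_scong a b : scong a b -> forall n, In n (fn a) <-> In n (fn b).
Proof.
  induction 1; intro n; simpl.
  - tauto.
  - specialize (IHscong n); tauto.
  - specialize (IHscong1 n); specialize (IHscong2 n); tauto.
  - specialize (IHscong1 n); specialize (IHscong2 n); rewrite !in_app_iff; tauto.
  - split; intros Hn; apply in_remove in Hn as [H1 H2]; apply in_in_remove; auto; apply IHscong; auto.
  - rewrite !in_app_iff. tauto.
  - rewrite !in_app_iff. tauto.
  - rewrite in_app_iff. split.
    + intros [Hn|Hn]. apply in_remove in Hn as [H1 H2]. apply in_in_remove; auto. apply in_app_iff; auto.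
      apply in_in_remove; [intro; subst; contradiction|apply in_app_iff; auto].
    + intro Hn. apply in_remove in Hn as [H1 H2]. apply in_app_iff in H1 as [H1|H1]; auto.
      left. apply in_in_remove; auto.
  - split; intro Hn; repeat (apply in_remove in Hn as [Hn ?]); repeat apply in_in_remove; auto.
  - rewrite fn_swap. split; intro Hn.
    + apply in_remove in Hn as [H1 H2].
      assert (n <> q) by (intro; subst; apply H; apply in_in_remove; auto).
      apply in_in_remove; auto. apply in_map_iff. exists n. split; auto. apply swp_o; auto.
    + apply in_remove in Hn as [H1 H2]. apply in_map_iff in H1 as [m [E Hm]]. subst.
      unfold swp in *. destruct (Nat.eq_dec m p). subst; contradiction.
      destruct (Nat.eq_dec m q). subst. exfalso; apply H. apply in_in_remove; auto.
      apply in_in_remove; auto.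
Qed.

Lemma nus_app B1 B2 t : nus (B1 ++ B2) t = nus B1 (nus B2 t).
Proof. induction B1; simpl; auto. rewrite IHB1; auto. Qed.

Lemma scong_nus B t t' : scong t t' -> scong (nus B t) (nus B t').
Proof. induction B; simpl; auto. intro. apply sc_nu. auto. Qed.

Lemma par_nus_l B t u : (forall b, In b B -> ~ In b (fn u)) -> scong (Par (nus B t) u) (nus B (Par t u)).
Proof.
  induction B as [|b B IH]; intro H; simpl. apply sc_refl.
  eapply sc_trans. apply sc_extr. apply H; simpl; auto.
  apply sc_nu. apply IH. intros; apply H; simpl; auto.
Qed.

Lemma fn_par_subs M : M <> [] -> fn (par_subs M) = names M.
Proof.
  induction M as [|x M IH]; intro H; [congruence|]. destruct M as [|y M].
  - simpl. unfold names; simpl. rewrite app_nil_r; auto.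
  - change (par_subs (x :: y :: M)) with (Par (Sub x) (par_subs (y :: M))).
    change (fn (Par (Sub x) (par_subs (y :: M)))) with (sub_fn x ++ fn (par_subs (y :: M))).
    rewrite IH by discriminate. auto.
Qed.

Lemma par_subs_app M1 M2 : M1 <> [] -> M2 <> [] ->
  scong (Par (par_subs M1) (par_subs M2)) (par_subs (M1 ++ M2)).
Proof.
  induction M1 as [|x M1 IH]; intros H1 H2; [congruence|]. destruct M1 as [|y M1].
  - simpl. destruct M2; [congruence|]. apply sc_refl.
  - change (par_subs (x :: y :: M1)) with (Par (Sub x) (par_subs (y :: M1))).
    change ((x :: y :: M1) ++ M2) with (x :: ((y :: M1) ++ M2)).
    replace (par_subs (x :: (y :: M1) ++ M2)) with (Par (Sub x) (par_subs ((y :: M1) ++ M2))) by reflexivity.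
    eapply sc_trans. apply sc_assoc. apply sc_par. apply sc_refl. apply IH; auto. discriminate.
Qed.

Lemma par_subs_perm M M' : Permutation M M' -> M <> [] -> scong (par_subs M) (par_subs M').
Proof.
  induction 1; intro Hne.
  - congruence.
  - destruct l as [|y l]. apply Permutation_nil in H. subst. apply sc_refl.
    destruct l' as [|y' l']. apply Permutation_sym, Permutation_nil in H. discriminate.
    change (scong (Par (Sub x) (par_subs (y :: l))) (Par (Sub x) (par_subs (y' :: l')))).
    apply sc_par. apply sc_refl. apply IHPermutation. discriminate.
  - destruct l as [|z l].
    + simpl. apply sc_comm.
    + change (scong (Par (Sub y) (Par (Sub x) (par_subs (z :: l)))) (Par (Sub x) (Par (Sub y) (par_subs (z :: l))))).
      eapply sc_trans. apply sc_sym, sc_assoc. eapply sc_trans. apply sc_par. apply sc_comm. apply sc_refl.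
      apply sc_assoc.
  - eapply sc_trans. apply IHPermutation1; auto. apply IHPermutation2.
    intro; subst. apply Permutation_sym, Permutation_nil in H. contradiction.
Qed.

Lemma swap_nus p q B t : (forall b, In b B -> b <> p /\ b <> q) -> swap p q (nus B t) = nus B (swap p q t).
Proof.
  induction B as [|b B IH]; intro H; simpl; auto. rewrite IH by (intros; apply H; simpl; auto).
  destruct (H b) as [H1 H2]; simpl; auto. rewrite swp_o; auto.
Qed.

Lemma swap_par_subs p q M : swap p q (par_subs M) = par_subs (map (swap_sub p q) M).
Proof.
  induction M as [|x M IH]; simpl; auto. destruct M as [|y M]; simpl; auto.
  simpl in IH. rewrite IH. auto.
Qed.

Lemma scong_par_nus Ba Bb ta tb :
  (forall x, In x Ba -> ~ In x (fn (nus Bb tb))) -> (forall x, In x Bb -> ~ In x (fn ta)) ->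
  scong (Par (nus Ba ta) (nus Bb tb)) (nus (Ba ++ Bb) (Par ta tb)).
Proof.
  intros Ha Hb. eapply sc_trans; [apply par_nus_l; auto|].
  rewrite nus_app. apply scong_nus.
  eapply sc_trans; [apply sc_comm|]. eapply sc_trans; [apply par_nus_l; auto|].
  apply scong_nus, sc_comm.
Qed.

(* Every state is congruent to nus B (par_subs M), with binders
   B avoiding a given list Y; its flattening is M renamed by phi B g, which sends
   a binder b to the odd name 2 g(b) + 1 and a free point n to 2n. *)
Definition phi (B : list nat) (g : nat -> nat) (n : nat) : nat :=
  if in_dec Nat.eq_dec n B then 2 * g n + 1 else 2 * n.

Definition merge_on (B : list nat) (g1 g2 : nat -> nat) (n : nat) : nat :=
  if in_dec Nat.eq_dec n B then g1 n else g2 n.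

Lemma phi_app_l Ba Bb ga gb n : In n Ba \/ ~ In n Bb ->
  phi (Ba ++ Bb) (merge_on Ba ga gb) n = phi Ba ga n.
Proof.
  intro H. unfold phi, merge_on.
  destruct (in_dec Nat.eq_dec n (Ba ++ Bb)) as [Hab|Hab], (in_dec Nat.eq_dec n Ba) as [Ha|Ha]; auto.
  - apply in_app_iff in Hab. exfalso. tauto.
  - exfalso. apply Hab, in_app_iff. tauto.
Qed.

Lemma phi_app_r Ba Bb ga gb n : ~ In n Ba ->
  phi (Ba ++ Bb) (merge_on Ba ga gb) n = phi Bb gb n.
Proof.
  intro H. unfold phi, merge_on.
  destruct (in_dec Nat.eq_dec n (Ba ++ Bb)) as [Hab|Hab], (in_dec Nat.eq_dec n Ba) as [Ha|Ha],
    (in_dec Nat.eq_dec n Bb) as [Hb|Hb]; try contradiction; auto.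
  - apply in_app_iff in Hab. exfalso. tauto.
  - exfalso. apply Hab, in_app_iff. tauto.
Qed.

Lemma phi_rebind p p' k Ba ga F Ma La :
  ~ In p Ba -> ~ In p' Ba -> p <> p' -> ~ In p' F -> incl (names Ma) (F ++ Ba) ->
  ~ In (2*k+1) (names La) -> Permutation La (map (ren (phi Ba ga)) Ma) ->
  forall n, In n (names Ma) ->
    phi (p' :: Ba) (fun m => if Nat.eq_dec m p' then k else ga m) (swp p p' n) =
    swp (2*p) (2*k+1) (phi Ba ga n).
Proof.
  intros HpB Hp'B Hpp Hp'F HM HK HP n Hn.
  assert (Hin : In (phi Ba ga n) (names La)).
  { apply (perm_in_names _ _ _ (Permutation_sym HP)). rewrite names_map. apply in_map; auto. }
  destruct (in_dec Nat.eq_dec n Ba) as [HnB|HnB].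
  - assert (n <> p) by (intro; subst; contradiction). assert (n <> p') by (intro; subst; contradiction).
    rewrite swp_o by auto. unfold phi in *.
    destruct (in_dec Nat.eq_dec n (p' :: Ba)) as [_|Hc]; [|exfalso; apply Hc; simpl; auto].
    destruct (in_dec Nat.eq_dec n Ba) as [_|]; [|contradiction].
    destruct Nat.eq_dec; [contradiction|].
    rewrite swp_o; [reflexivity|lia|intro E; rewrite <- E in HK; contradiction].
  - apply HM, in_app_iff in Hn as [Hn|Hn]; [|contradiction].
    assert (n <> p') by (intro; subst; tauto).
    destruct (Nat.eq_dec n p).
    + subst. rewrite swp_l. unfold phi. destruct in_dec as [_|Hc]; [|exfalso; apply Hc; simpl; auto].
      destruct (in_dec Nat.eq_dec p Ba); [contradiction|]. destruct Nat.eq_dec; [|congruence].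
      rewrite swp_l. auto.
    + rewrite swp_o by auto. unfold phi. destruct in_dec as [Hc|_].
      { simpl in Hc. destruct Hc; [congruence|contradiction]. }
      destruct (in_dec Nat.eq_dec n Ba); [contradiction|]. rewrite swp_o; lia.
Qed.

Definition inj_on (f : nat -> nat) (l : list nat) : Prop :=
  forall x y, In x l -> In y l -> f x = f y -> x = y.

Record NormalForm (a : state) (L : list sub) (Y B : list nat) (g : nat -> nat) (M : list sub) : Prop := {
  nf_nodup : NoDup B;
  nf_fresh : forall b, In b B -> ~ In b Y;
  nf_nonempty : M <> [];
  nf_scong : scong a (nus B (par_subs M));
  nf_perm : Permutation L (map (ren (phi B g)) M);
  nf_inj : inj_on (phi B g) (names M);
  nf_names : incl (names M) (fn a ++ B) }.

Lemma normal_form_par a b La Lb Y : odd_disjoint La Lb ->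
  (forall Y, exists B g M, NormalForm a La Y B g M) ->
  (forall Y, exists B g M, NormalForm b Lb Y B g M) ->
  exists B g M, NormalForm (Par a b) (La ++ Lb) Y B g M.
Proof.
  intros HD IHa IHb.
  destruct (IHb (Y ++ fn a)) as [Bb [gb [Mb [N1 N2 N3 N4 N5 N6 N7]]]].
  destruct (IHa (Y ++ fn b ++ Bb)) as [Ba [ga [Ma [M1 M2 M3 M4 M5 M6 M7]]]].
  set (g := merge_on Ba ga gb).
  assert (EA : forall n, In n (names Ma) -> phi (Ba ++ Bb) g n = phi Ba ga n).
  { intros n Hn. apply phi_app_l. destruct (in_dec Nat.eq_dec n Ba) as [|HnB]; auto. right.
    intro Hb. apply M7, in_app_iff in Hn as [Hn|Hn]; [|contradiction].
    apply (N2 n Hb). apply in_app_iff; auto. }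
  assert (EB : forall n, In n (names Mb) -> phi (Ba ++ Bb) g n = phi Bb gb n).
  { intros n Hn. apply phi_app_r. intro Hc. apply (M2 n Hc).
    apply N7 in Hn. rewrite !in_app_iff in *. tauto. }
  (* a name of Ma and a name of Mb never collide: their images are in La and Lb *)
  assert (Hcross : forall x y, In x (names Ma) -> In y (names Mb) ->
            phi (Ba ++ Bb) g x = phi (Ba ++ Bb) g y -> x = y).
  { intros x y Hx Hy E. rewrite EA in E by auto. rewrite EB in E by auto.
    assert (P1 : In (phi Ba ga x) (names La)).
    { apply (perm_in_names _ _ _ (Permutation_sym M5)). rewrite names_map. apply in_map; auto. }
    assert (P2 : In (phi Bb gb y) (names Lb)).
    { apply (perm_in_names _ _ _ (Permutation_sym N5)). rewrite names_map. apply in_map; auto. }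
    unfold phi in E, P1, P2. destruct in_dec; destruct in_dec; try lia.
    rewrite E in P1. exfalso. apply (HD _ P1); auto. apply Nat.odd_odd. }
  exists (Ba ++ Bb), g, (Ma ++ Mb). split.
  - apply NoDup_app; auto. intros x Hx Hy. apply (M2 x Hx). apply in_app_iff; right; apply in_app_iff; auto.
  - intros x Hx. apply in_app_iff in Hx as [Hx|Hx]; [intro; apply (M2 x Hx); apply in_app_iff; auto|].
    intro; apply (N2 x Hx); apply in_app_iff; auto.
  - destruct Ma; [congruence|discriminate].
  - eapply sc_trans; [apply sc_par; eauto|]. eapply sc_trans; [apply scong_par_nus|].
    + intros x Hx Hc. apply (fn_scong _ _ (sc_sym _ _ N4)) in Hc. apply (M2 x Hx).
      apply in_app_iff; right; apply in_app_iff; auto.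
    + intros x Hx Hc. rewrite fn_par_subs in Hc by auto. apply M7, in_app_iff in Hc as [Hc|Hc].
      * apply (N2 x Hx). apply in_app_iff; auto.
      * apply (M2 x Hc). rewrite !in_app_iff; auto.
    + apply scong_nus, par_subs_app; auto.
  - rewrite map_app. apply Permutation_app.
    + rewrite (map_ren_ext _ _ Ma EA); auto.
    + rewrite (map_ren_ext _ _ Mb EB); auto.
  - intros x y Hx Hy E. rewrite names_app in Hx, Hy. apply in_app_iff in Hx, Hy.
    destruct Hx as [Hx|Hx]; destruct Hy as [Hy|Hy].
    + rewrite !EA in E by auto. auto.
    + auto.
    + symmetry. auto.
    + rewrite !EB in E by auto. auto.
  - intros n Hn. rewrite names_app in Hn. simpl. rewrite !in_app_iff. apply in_app_iff in Hn as [Hn|Hn].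
    + apply M7 in Hn. rewrite in_app_iff in Hn. tauto.
    + apply N7 in Hn. rewrite in_app_iff in Hn. tauto.
Qed.

(* The restricted point p becomes a fresh binder p', so that the binders of
   the normal form avoid any given list Y. *)
Lemma normal_form_nu p a La k Y : ~ In (2*k+1) (names La) ->
  (forall Y, exists B g M, NormalForm a La Y B g M) ->
  exists B g M, NormalForm (Nu p a) (map (ren (swp (2*p) (2*k+1))) La) Y B g M.
Proof.
  intros HK IHa.
  destruct (fresh_nat (Y ++ fn a ++ [p])) as [p' Hp']. rewrite !in_app_iff in Hp'. simpl in Hp'.
  destruct (IHa (Y ++ [p; p'])) as [Ba [ga [Ma [M1 M2 M3 M4 M5 M6 M7]]]].
  assert (Hpp : p <> p') by (intro; subst; tauto).
  assert (HpB : ~ In p Ba) by (intro Hc; apply (M2 p Hc); apply in_app_iff; simpl; auto).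
  assert (Hp'B : ~ In p' Ba) by (intro Hc; apply (M2 p' Hc); apply in_app_iff; simpl; auto).
  pose proof (phi_rebind p p' k Ba ga (fn a) Ma La HpB Hp'B Hpp ltac:(tauto) M7 HK M5) as Ekey.
  set (g' := fun m => if Nat.eq_dec m p' then k else ga m) in *.
  assert (Eswap : map (swap_sub p p') Ma = map (ren (swp p p')) Ma)
    by (apply map_ext; intros; rewrite swap_sub_ren; auto).
  exists (p' :: Ba), g', (map (swap_sub p p') Ma). split.
  - constructor; auto.
  - intros b Hb. simpl in Hb. destruct Hb as [Hb|Hb]; [subst; tauto|].
    intro; apply (M2 b Hb); apply in_app_iff; auto.
  - destruct Ma; [congruence|discriminate].
  - eapply sc_trans; [apply sc_nu; eauto|]. simpl. rewrite <- swap_par_subs, <- swap_nus.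
    + apply sc_alpha. intro Hc. apply (fn_scong _ _ (sc_nu p _ _ (sc_sym _ _ M4))) in Hc.
      simpl in Hc. apply in_remove in Hc as [Hc _]. tauto.
    + intros b Hb. split; intro; subst; contradiction.
  - eapply Permutation_trans; [apply Permutation_map; eauto|].
    rewrite Eswap, !map_ren_comp, (map_ren_ext _ _ Ma Ekey). auto.
  - rewrite Eswap. intros x y Hx Hy E. rewrite names_map in Hx, Hy.
    apply in_map_iff in Hx as [x0 [Ex Hx]]. apply in_map_iff in Hy as [y0 [Ey Hy]]. subst.
    rewrite !Ekey in E by auto. apply swp_inj in E. apply M6 in E; subst; auto.
  - rewrite Eswap. intros x Hx. rewrite names_map in Hx. apply in_map_iff in Hx as [x0 [Ex Hx]]. subst.
    apply M7 in Hx. apply in_app_iff. apply in_app_iff in Hx as [Hx|Hx].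
    + destruct (Nat.eq_dec x0 p); [subst; rewrite swp_l; right; simpl; auto|].
      assert (x0 <> p') by (intro; subst; tauto). rewrite swp_o by auto.
      left. simpl. apply in_in_remove; auto.
    + assert (x0 <> p) by (intro; subst; contradiction). assert (x0 <> p') by (intro; subst; contradiction).
      rewrite swp_o by auto. right. simpl; auto.
Qed.

Lemma normal_form a L : Flat a L -> forall Y, exists B g M, NormalForm a L Y B g M.
Proof.
  induction 1 as [x|a b La Lb _ IHa _ IHb HD|p a La k _ IHa HK]; intro Y.
  - exists [], (fun n => n), [x]. split; auto.
    + constructor.
    + discriminate.
    + apply sc_refl.
    + intros y z _ _. unfold phi. simpl. lia.
    + intros n Hn. unfold names in Hn. simpl in *. rewrite app_nil_r in *. auto.
  - apply normal_form_par; auto.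
  - apply normal_form_nu; auto.
Qed.

(* Conversely, a state nus B t flattens to the flattening of t renamed by psi,
   the action of phi on encoded names, provided g gives fresh odd names. *)
Definition psi (B : list nat) (g : nat -> nat) (n : nat) : nat :=
  if Nat.odd n then n else if in_dec Nat.eq_dec (Nat.div2 n) B then 2 * g (Nat.div2 n) + 1 else n.

Lemma even_div2 m : Nat.odd m = false -> m = 2 * Nat.div2 m.
Proof. intro H. rewrite (Nat.div2_odd m) at 1. rewrite H. simpl. lia. Qed.

Lemma psi_dbl B g n : psi B g (2 * n) = phi B g n.
Proof. unfold psi, phi. rewrite Nat.odd_even, Nat.div2_double. auto. Qed.

Lemma flat_nus_phi B t Lt g : NoDup B -> Flat t Lt ->
  (forall b, In b B -> In (2*b) (names Lt) -> ~ In (2 * g b + 1) (names Lt)) ->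
  (forall b b', In b B -> In b' B -> In (2*b) (names Lt) -> In (2*b') (names Lt) -> g b = g b' -> b = b') ->
  Flat (nus B t) (map (ren (psi B g)) Lt).
Proof.
  intros HN HI. induction HN as [|b B' Hb HN IH]; intros H1 H2.
  - simpl. rewrite map_ren_id; auto. intros n _. unfold psi. destruct Nat.odd; auto.
  - assert (IH' : Flat (nus B' t) (map (ren (psi B' g)) Lt)).
    { apply IH. intros; apply H1; simpl; auto. intros; apply H2; simpl; auto. }
    simpl.
    assert (Hgen : forall k, ~ In (2*k+1) (names (map (ren (psi B' g)) Lt)) ->
      (In (2*b) (names Lt) -> k = g b) ->
      Flat (Nu b (nus B' t)) (map (ren (psi (b :: B') g)) Lt)).
    { intros k Hk Hkb. apply (flat_nu_eq b _ _ k _ IH' Hk). rewrite map_ren_comp. apply map_ren_ext.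
      intros m Hm. unfold psi. destruct (Nat.odd m) eqn:Ho.
      - rewrite swp_o; auto. intro; subst; rewrite Nat.odd_even in Ho; discriminate.
        intro; subst. apply Hk. rewrite names_map. apply in_map_iff. exists (2*k+1). split; auto.
        unfold psi. rewrite Nat.odd_odd. auto.
      - pose proof (even_div2 m Ho) as Em.
        destruct (in_dec Nat.eq_dec (Nat.div2 m) B') as [HB|HB]; destruct (in_dec Nat.eq_dec (Nat.div2 m) (b :: B')) as [HB2|HB2].
        + rewrite swp_o; auto. lia. intro E. apply Hk. rewrite names_map. apply in_map_iff. exists m. split; auto.
          unfold psi. rewrite Ho. destruct in_dec; [|contradiction]. auto.
        + exfalso; apply HB2; simpl; auto.
        + simpl in HB2. destruct HB2 as [HB2|HB2]; [|contradiction].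
          rewrite <- HB2 in *. rewrite <- Em. rewrite swp_l. rewrite Hkb; auto. rewrite <- Em; auto.
        + rewrite swp_o; auto. intro E. apply HB2. left. rewrite E, Nat.div2_double. auto.
          intro E. rewrite E in Ho. rewrite Nat.odd_odd in Ho. discriminate. }
    destruct (in_dec Nat.eq_dec (2*b) (names Lt)) as [Hin|Hin].
    + apply (Hgen (g b)); auto. intro Hc. rewrite names_map in Hc. apply in_map_iff in Hc as [m [E Hm]].
      unfold psi in E. destruct (Nat.odd m) eqn:Ho.
      * subst. apply (H1 b); simpl; auto.
      * pose proof (even_div2 m Ho) as Em. destruct in_dec.
        -- assert (Nat.div2 m = b).
           { apply (H2 (Nat.div2 m) b); auto. simpl; auto. simpl; auto. rewrite <- Em; auto. lia. }
           subst. contradiction.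
        -- subst. rewrite Nat.odd_odd in Ho. discriminate.
    + destruct (fresh_odd (names (map (ren (psi B' g)) Lt))) as [k Hk]. apply (Hgen k); auto. contradiction.
Qed.

Definition par2 (T : state) (Mr : list sub) : state :=
  match Mr with [] => T | _ => Par T (par_subs Mr) end.

Lemma par2_par_subs Ml Mr : Ml <> [] -> scong (par_subs (Ml ++ Mr)) (par2 (par_subs Ml) Mr).
Proof.
  intro H. destruct Mr as [|y Mr]. rewrite app_nil_r. apply sc_refl.
  change (par2 (par_subs Ml) (y :: Mr)) with (Par (par_subs Ml) (par_subs (y :: Mr))). apply sc_sym.
  apply par_subs_app; auto. discriminate.
Qed.

Lemma par2_step T T' Mr : mstep T T' -> mstep (par2 T Mr) (par2 T' Mr).
Proof. destruct Mr; simpl; auto. intro. apply r_par. auto. Qed.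

Lemma flat_par2 T LT Mr : Flat T LT -> Flat (par2 T Mr) (LT ++ map enc Mr).
Proof.
  intro H. destruct Mr as [|y Mr]. simpl. rewrite app_nil_r; auto.
  change (par2 T (y :: Mr)) with (Par T (par_subs (y :: Mr))). constructor; auto. apply flat_par_subs.
  discriminate.
  intros n _ Ho Hc. apply names_enc_even in Hc. congruence.
Qed.

Lemma mstep_nus B t t' : mstep t t' -> mstep (nus B t) (nus B t').
Proof. induction B; simpl; auto. intro. apply r_nu. auto. Qed.

(* Firing a rule visible in a flattening: the instance is pulled back along phi
   to the normal form, where the machine can reduce it. *)
Definition inv_on (h : nat -> nat) (l : list nat) (y : nat) : nat :=
  match find (fun x => Nat.eqb (h x) y) l with Some x => x | None => y end.

Lemma inv_on_spec h l x : inj_on h l -> In x l -> inv_on h l (h x) = x.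
Proof.
  intros Hi Hx. unfold inv_on. destruct (find (fun x0 => Nat.eqb (h x0) (h x)) l) eqn:E.
  - apply find_some in E as [E1 E2]. apply Nat.eqb_eq in E2. apply Hi; auto.
  - eapply find_none in E; eauto. rewrite Nat.eqb_refl in E. discriminate.
Qed.

Lemma phi_binders_inj B g l b b' : inj_on (phi B g) l -> In b B -> In b' B ->
  In b l -> In b' l -> g b = g b' -> b = b'.
Proof.
  intros Hinj Hb Hb' H1 H2 E. apply Hinj; auto.
  unfold phi. destruct in_dec; [|contradiction]. destruct in_dec; [|contradiction]. lia.
Qed.

Lemma normal_form_split a L lhs rest : Flat a L -> Permutation L (lhs ++ rest) ->
  exists B g M Ml Mr, NormalForm a L [] B g M /\ Permutation M (Ml ++ Mr) /\
    map (ren (phi B g)) Ml = lhs /\ map (ren (phi B g)) Mr = rest.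
Proof.
  intros HI HP. destruct (normal_form a L HI []) as [B [g [M HNF]]].
  destruct HNF as [N1 N2 N3 N4 N5 N6 N7].
  assert (P : Permutation (lhs ++ rest) (map (ren (phi B g)) M)).
  { eapply Permutation_trans. apply Permutation_sym; eauto. auto. }
  apply Permutation_map_inv in P as [M1 [E P]]. symmetry in E. apply map_eq_app in E as [Ml [Mr [E1 [E2 E3]]]].
  subst. exists B, g, M, Ml, Mr. repeat split; auto.
Qed.

Lemma fire_base_raw a L lhs rhs rest : Flat a L -> Permutation L (lhs ++ rest) -> BaseRule lhs rhs ->
  exists a' L', mstep a a' /\ Flat a' L' /\ Permutation L' (rhs ++ rest).
Proof.
  intros HI HP HR. destruct (normal_form_split a L lhs rest HI HP) as [B [g [M [Ml [Mr [HNF [PM [El Er]]]]]]]].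
  destruct HNF as [N1 N2 N3 N4 N5 N6 N7].
  set (h := phi B g) in *.
  assert (Hsub : incl (names (Ml ++ Mr)) (names M)).
  { intros n Hn. apply (perm_in_names _ _ _ (Permutation_sym PM)); auto. }
  set (h' := inv_on h (names M)).
  set (Mrhs := map (ren h') rhs).
  assert (Hl : map (ren h') lhs = Ml).
  { subst lhs. rewrite map_ren_comp. apply map_ren_id. intros n Hn. apply inv_on_spec; auto.
    apply Hsub. rewrite names_app. apply in_or_app; auto. }
  assert (HR' : BaseRule Ml Mrhs) by (rewrite <- Hl; apply base_rule_ren; auto).
  assert (Hr : map (ren h) Mrhs = rhs).
  { unfold Mrhs. rewrite map_ren_comp. apply map_ren_id. intros n Hn.
    apply (base_rule_names _ _ HR) in Hn. subst lhs. rewrite names_map in Hn.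
    apply in_map_iff in Hn as [m [E Hm]]. subst. unfold h'. rewrite inv_on_spec; auto.
    apply Hsub. rewrite names_app. apply in_or_app; auto. }
  destruct (base_rule_ne _ _ HR') as [Nl Nr].
  assert (Hsub' : incl (names (Mrhs ++ Mr)) (names M)).
  { intros z Hz. rewrite names_app in Hz. apply in_app_iff in Hz as [Hz|Hz]; apply Hsub;
      rewrite names_app; apply in_or_app; auto.
    left. apply (base_rule_names _ _ HR'); auto. }
  exists (nus B (par2 (par_subs Mrhs) Mr)), (map (ren (psi B g)) (map enc Mrhs ++ map enc Mr)). repeat split.
  - eapply r_struct; [|apply mstep_nus, par2_step, base_rule_step; eauto|apply sc_refl].
    eapply sc_trans; eauto. apply scong_nus. eapply sc_trans. apply par_subs_perm; eauto.
    apply par2_par_subs; auto.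
  - apply flat_nus_phi; auto.
    + apply flat_par2. apply flat_par_subs; auto.
    + intros b _ _ Hc. rewrite <- map_app in Hc. apply names_enc_even in Hc. rewrite Nat.odd_odd in Hc.
      discriminate.
    + intros b b' Hb Hb' H1 H2 E. rewrite <- map_app in H1, H2. apply names_enc_dbl in H1, H2.
      apply (phi_binders_inj B g (names M)); auto.
  - rewrite <- (map_app enc). unfold enc. rewrite map_ren_comp. rewrite map_app.
    replace (map (ren (fun n => psi B g (dbl n))) Mrhs) with rhs.
    replace (map (ren (fun n => psi B g (dbl n))) Mr) with rest. auto.
    + subst rest. apply map_ren_ext. intros. unfold dbl. rewrite psi_dbl. auto.
    + rewrite <- Hr. apply map_ren_ext. intros. unfold dbl. rewrite psi_dbl. auto.
Qed.

Lemma fire_retry_raw a L s rest : Flat a L -> Permutation L (SRetry s :: rest) ->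
  exists a' L' s', mstep a a' /\ Flat a' L' /\ Permutation L' (SOpen s' :: binds s' ++ rest) /\
    map snd s' = map snd s /\ (NoDup (dom s) -> NoDup (dom s')) /\ (forall n, In n (dom s') -> ~ In n (names L)).
Proof.
  intros HI HP. destruct (normal_form_split a L [SRetry s] rest HI HP) as [B [g [M [Ml [Mr [HNF [PM [El Er]]]]]]]].
  destruct HNF as [N1 N2 N3 N4 N5 N6 N7].
  set (h := phi B g) in *.
  destruct Ml as [|x Ml]; [discriminate|]. destruct Ml; [|discriminate]. simpl in El. injection El as El.
  destruct x; simpl in El; try discriminate. injection El as El.
  set (X := names L ++ map (fun b => 2 * g b + 1) B).
  destruct (flat_reopen s0 X) as [f [Hinj [HIT HT]]].
  set (LT := map (ren f) (map enc (SOpen s0 :: binds s0))).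
  assert (HLT : forall n, In n (names LT) -> Nat.odd n = true /\ ~ In n X).
  { intros n Hn. unfold LT in Hn. rewrite names_map in Hn. apply in_map_iff in Hn as [m [E Hm]]. subst. auto. }
  assert (Hsub : incl (names ([SRetry s0] ++ Mr)) (names M)).
  { intros n Hn. apply (perm_in_names _ _ _ (Permutation_sym PM)); auto. }
  set (s' := ren_sync f (ren_sync dbl s0)).
  exists (nus B (par2 (nus (dom s0) (parl (Sub (SOpen s0)) (bindings s0))) Mr)),
         (map (ren (psi B g)) (LT ++ map enc Mr)), s'. repeat split.
  - eapply r_struct; [|apply mstep_nus, par2_step; apply r_IVii|apply sc_refl].
    eapply sc_trans; eauto. apply scong_nus. eapply sc_trans. apply par_subs_perm; eauto.
    apply (par2_par_subs [SRetry s0]). discriminate.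
  - apply flat_nus_phi; auto.
    + apply flat_par2. exact HIT.
    + intros b Hb H1 Hc. rewrite names_app in Hc, H1. apply in_app_iff in Hc as [Hc|Hc].
      * apply HLT in Hc as [_ Hc]. apply Hc. unfold X. apply in_app_iff. right. apply in_map_iff. exists b; auto.
      * apply names_enc_even in Hc. rewrite Nat.odd_odd in Hc. discriminate.
    + intros b b' Hb Hb' H1 H2 E. rewrite names_app in H1, H2. apply in_app_iff in H1, H2.
      destruct H1 as [H1|H1]; [apply HLT in H1 as [H1 _]; rewrite Nat.odd_even in H1; discriminate|].
      destruct H2 as [H2|H2]; [apply HLT in H2 as [H2 _]; rewrite Nat.odd_even in H2; discriminate|].
      apply names_enc_dbl in H1, H2. apply (phi_binders_inj B g (names M)); auto;
        apply Hsub; rewrite names_app; apply in_or_app; auto.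
  - rewrite map_app. rewrite (map_ren_id _ LT).
    + replace (map (ren (psi B g)) (map enc Mr)) with rest.
      * unfold LT. simpl. unfold enc. simpl. rewrite !binds_ren. auto.
      * subst rest. unfold enc. rewrite map_ren_comp. apply map_ren_ext. intros. unfold dbl. rewrite psi_dbl. auto.
    + intros n Hn. apply HLT in Hn as [Ho _]. unfold psi. rewrite Ho. auto.
  - unfold s'. rewrite !snd_ren. subst s. rewrite snd_ren. auto.
  - unfold s'. rewrite !dom_ren. intro H. subst s. rewrite dom_ren in H. apply NoDup_map_inv in H.
    apply FinFun.Injective_map_NoDup; auto. apply FinFun.Injective_map_NoDup; auto. intros x y; unfold dbl; lia.
  - intros n Hn Hc. unfold s' in Hn. rewrite !dom_ren in Hn. apply in_map_iff in Hn as [m [E Hm]]. subst.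
    apply in_map_iff in Hm as [d [E Hd]]. subst.
    assert (Hin : In (dbl d) (names (map enc (SOpen s0 :: binds s0)))).
    { unfold names. simpl. apply in_or_app. left. unfold enc. simpl. rewrite dom_ren. apply in_map; auto. }
    apply HT in Hin as [_ Hin]. apply Hin. unfold X. apply in_or_app; auto.
Qed.

(* Well-formedness of a multiset: the invariant of reachable states.  Points are
   busy while a candidate, selected or rejected; a synchronizer is live while open
   or closed. *)
Definition sync_dom (x : sub) : list nat := match x with SOpen s | SClosed s => dom s | _ => [] end.

Definition point_of (x : sub) : list nat :=
  match x with SBind p _ | SCand p | SSelect _ p | SReject p | SDone _ p => [p] | _ => [] end.

Definition match_points (x : sub) : list nat := match x with SMatch _ p q => [p; q] | _ => [] end.

Definition busy_point (x : sub) : list nat := match x with SCand p | SSelect _ p | SReject p => [p] | _ => [] end.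

Definition SyncIn (s : sync) (L : list sub) : Prop := In (SOpen s) L \/ In (SClosed s) L.

Definition ChanPresent (c : chan) (L : list sub) : Prop := In (SFree c) L \/ exists x y, In (SMatch c x y) L.

Record WellFormed (L : list sub) : Prop := {
  wf_syncs : NoDup (flat_map sync_dom L);
  wf_points : NoDup (flat_map point_of L);
  wf_matches : NoDup (flat_map match_points L);
  wf_bind_owned : forall x a, In (SBind x a) L -> exists s, SyncIn s L /\ In (x, a) s;
  wf_match_owned : forall c x y, In (SMatch c x y) L ->
    (exists s, SyncIn s L /\ In (x, AIn c) s) /\ (exists s, SyncIn s L /\ In (y, AOut c) s) /\
    In x (flat_map busy_point L) /\ In y (flat_map busy_point L);
  wf_busy_matched : forall x, In x (flat_map busy_point L) ->
    exists c y, In (SMatch c x y) L \/ In (SMatch c y x) L;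
  wf_select_closed : forall s x, In (SSelect s x) L -> In (SClosed s) L /\ In x (dom s);
  wf_done_closed : forall s x, In (SDone s x) L -> In (SClosed s) L /\ In x (dom s);
  wf_retry_closed : forall s, In (SRetry s) L -> In (SClosed s) L;
  wf_open_points : forall s x a, In (SOpen s) L -> In (x, a) s -> In (SBind x a) L \/ In (SCand x) L;
  wf_chan_present : forall s x a, SyncIn s L -> In (x, a) s -> ChanPresent (chan_of a) L
}.

Lemma nodup_disj {A} (l1 l2 : list A) x : NoDup (l1 ++ l2) -> In x l1 -> ~ In x l2.
Proof.
  induction l1; simpl; intros H H1; [contradiction|]. apply NoDup_cons_iff in H as [Ha Hr].
  destruct H1; subst; auto. intro; apply Ha; apply in_or_app; auto.
Qed.

Lemma flat_map_unique {A} (f : A -> list nat) L y1 y2 x : NoDup (flat_map f L) -> In y1 L -> In y2 L ->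
  In x (f y1) -> In x (f y2) -> y1 = y2.
Proof.
  induction L as [|a L IH]; simpl; intros H H1 H2 H3 H4; [contradiction|].
  destruct H1 as [H1|H1]; destruct H2 as [H2|H2]; subst; auto.
  - exfalso. eapply nodup_disj; eauto. apply in_flat_map; eauto.
  - exfalso. eapply nodup_disj; eauto. apply in_flat_map; eauto.
  - apply IH; auto. apply NoDup_app_remove_l in H; auto.
Qed.

Lemma nodup_item {A} (f : A -> list nat) L y : NoDup (flat_map f L) -> In y L -> NoDup (f y).
Proof.
  induction L as [|a L IH]; simpl; intros H H1; [contradiction|].
  destruct H1; subst. apply NoDup_app_remove_r in H; auto. apply IH; auto. apply NoDup_app_remove_l in H; auto.
Qed.

Lemma nodup_cons2 (p q : nat) l : NoDup (p :: q :: l) -> NoDup l /\ ~ In p l /\ ~ In q l /\ p <> q.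
Proof. intro H. inversion H; subst. inversion H3; subst. simpl in *. repeat split; auto. Qed.

Lemma in_dom_pair (x : nat) (a : action) s : In (x, a) s -> In x (dom s).
Proof. intro. unfold dom. apply in_map_iff. exists (x,a); auto. Qed.

Lemma busy_point_of x L : In x (flat_map busy_point L) -> In x (flat_map point_of L).
Proof. intro H. apply in_flat_map in H as [y [Hy Hx]]. apply in_flat_map. exists y. split; auto. destruct y; simpl in *; auto. Qed.

Lemma match_points_inv x L : In x (flat_map match_points L) ->
  exists c y, In (SMatch c x y) L \/ In (SMatch c y x) L.
Proof.
  intro H. apply in_flat_map in H as [z [Hz Hx]]. destruct z; simpl in Hx; try contradiction.
  destruct Hx as [E|[E|[]]]; subst; eauto.
Qed.

Lemma match_points_in c x y L : In (SMatch c x y) L ->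
  In x (flat_map match_points L) /\ In y (flat_map match_points L).
Proof. intro H. split; apply in_flat_map; exists (SMatch c x y); simpl; auto. Qed.

Lemma in_fm {A} (f : A -> list nat) L y x : In y L -> In x (f y) -> In x (flat_map f L).
Proof. intros. apply in_flat_map; eauto. Qed.

Lemma busy_point_cases x L : In x (flat_map busy_point L) ->
  In (SCand x) L \/ (exists s, In (SSelect s x) L) \/ In (SReject x) L.
Proof.
  intro H. apply in_flat_map in H as [z [Hz Hx]]. destruct z; simpl in Hx; try contradiction;
  destruct Hx as [E|[]]; subst; eauto.
Qed.

Lemma wf_perm L L' : WellFormed L -> Permutation L L' -> WellFormed L'.
Proof.
  intros H P. assert (HI : forall x, In x L -> In x L') by (intros; eapply Permutation_in; eauto).
  assert (HI' : forall x, In x L' -> In x L) by (intros; eapply Permutation_in; [apply Permutation_sym|]; eauto).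
  assert (HF : forall (f : sub -> list nat) x, In x (flat_map f L) -> In x (flat_map f L')).
  { intros f x Hx. eapply Permutation_in; [apply Permutation_flat_map|]; eauto. }
  assert (HF' : forall (f : sub -> list nat) x, In x (flat_map f L') -> In x (flat_map f L)).
  { intros f x Hx. eapply Permutation_in; [apply Permutation_flat_map, Permutation_sym|]; eauto. }
  assert (HO : forall s, SyncIn s L -> SyncIn s L') by (unfold SyncIn; intros s [?|?]; auto).
  assert (HM : forall c, ChanPresent c L -> ChanPresent c L') by (unfold ChanPresent; intros c [?|[x [y ?]]]; eauto).
  destruct H as [g1 g2 g3 g4 g5 g6 g7a g7b g7c g8 g9]; constructor.
  - eapply Permutation_NoDup; [apply Permutation_flat_map|]; eauto.
  - eapply Permutation_NoDup; [apply Permutation_flat_map|]; eauto.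
  - eapply Permutation_NoDup; [apply Permutation_flat_map|]; eauto.
  - intros x a Hx. destruct (g4 x a (HI' _ Hx)) as [s [? ?]]; eauto.
  - intros c x y Hx. destruct (g5 c x y (HI' _ Hx)) as [[s1 [? ?]] [[s2 [? ?]] [? ?]]]. repeat split; eauto.
  - intros x Hx. destruct (g6 x (HF' _ _ Hx)) as [c [y [?|?]]]; eauto.
  - intros s x Hx. destruct (g7a s x (HI' _ Hx)); auto.
  - intros s x Hx. destruct (g7b s x (HI' _ Hx)); auto.
  - intros s Hx. auto.
  - intros s x a Hx Ha. destruct (g8 s x a (HI' _ Hx) Ha); auto.
  - intros s x a Hx Ha. apply HM. apply (g9 s x a); auto. unfold SyncIn in *. destruct Hx; auto.
Qed.

(* memb H: case analysis on H : In x (y1 :: ... :: yk :: rest), one case per yi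
   that x may equal (unified with it), and the remaining case In x rest. *)
Ltac memb_go H := match type of H with
  | _ \/ _ => let H' := fresh "E" in destruct H as [H'|H];
        [ first [discriminate H' | injection H'; intros; subst | idtac ] | memb_go H ]
  | _ => idtac end.

Ltac memb H := simpl in H; memb_go H.

Lemma in_rest {A} (x : A) rest l : In x rest -> In x (l ++ rest).
Proof. intro; apply in_or_app; auto. Qed.

Lemma fm_rest {A} (f : A -> list nat) x rest l : In x (flat_map f rest) -> In x (flat_map f (l ++ rest)).
Proof. intro. rewrite flat_map_app. apply in_or_app; auto. Qed.

Lemma wf_I p q c rest : WellFormed ([SBind p (AIn c); SBind q (AOut c); SFree c] ++ rest) ->
  WellFormed ([SCand p; SCand q; SMatch c p q] ++ rest).
Proof.
  intros [g1 g2 g3 g4 g5 g6 g7a g7b g7c g8 g9].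
  assert (OCr : forall s, SyncIn s ([SBind p (AIn c); SBind q (AOut c); SFree c] ++ rest) -> SyncIn s ([SCand p; SCand q; SMatch c p q] ++ rest)).
  { unfold SyncIn. intros s [H|H]; memb H; simpl; auto 10. }
  assert (Hpq : p <> q). { simpl in g2. inversion g2; subst. intro; subst; simpl in *; tauto. }
  assert (Hp : ~ In p (flat_map point_of rest)). { simpl in g2. inversion g2; subst. simpl in *; tauto. }
  assert (Hq : ~ In q (flat_map point_of rest)). { simpl in g2. inversion g2; subst. inversion H2; auto. }
  assert (Hmn : forall z, In z (flat_map match_points rest) -> In z (flat_map point_of rest)).
  { intros z Hz. apply match_points_inv in Hz as [c' [y [Hz|Hz]]].
    - destruct (g5 c' z y (in_rest _ _ _ Hz)) as [_ [_ [Ht _]]]. simpl in Ht. apply busy_point_of; auto.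
    - destruct (g5 c' y z (in_rest _ _ _ Hz)) as [_ [_ [_ Ht]]]. simpl in Ht. apply busy_point_of; auto. }
  constructor.
  - simpl in *; auto.
  - simpl in *; auto.
  - simpl. constructor. simpl. intros [E|E]; [congruence|]. apply Hp, Hmn; auto.
    constructor. intro E. apply Hq, Hmn; auto. simpl in g3; auto.
  - intros x a Hx. memb Hx. destruct (g4 x a (in_rest _ _ _ Hx)) as [s [H1 H2]]. eauto.
  - intros c' x y Hx. memb Hx.
    + destruct (g4 x (AIn c') ltac:(simpl; auto)) as [s1 [H1 H2]].
      destruct (g4 y (AOut c') ltac:(simpl; auto)) as [s2 [H3 H4]].
      repeat split; eauto; simpl; auto.
    + destruct (g5 c' x y (in_rest _ _ _ Hx)) as [[s1 [H1 H2]] [[s2 [H3 H4]] [H5 H6]]].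
      repeat split; eauto; simpl in *; auto.
  - intros x Hx. simpl in Hx. destruct Hx as [E|[E|Hx]]; subst.
    + exists c, q. left. simpl; auto.
    + exists c, p. right. simpl; auto.
    + destruct (g6 x (fm_rest _ _ _ _ Hx)) as [c' [y [H|H]]]; memb H; exists c', y; [left|right]; apply in_rest; auto.
  - intros s x Hx. memb Hx. destruct (g7a s x (in_rest _ _ _ Hx)) as [H1 H2]. memb H1. split; auto.
    apply in_rest; auto.
  - intros s x Hx. memb Hx. destruct (g7b s x (in_rest _ _ _ Hx)) as [H1 H2]. memb H1. split; auto.
    apply in_rest; auto.
  - intros s Hx. memb Hx. specialize (g7c s (in_rest _ _ _ Hx)). memb g7c. apply in_rest; auto.
  - intros s x a Hx Ha. memb Hx. destruct (g8 s x a (in_rest _ _ _ Hx) Ha) as [H|H]; memb H; simpl; auto 10.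
  - intros s x a Hx Ha. assert (Hx' : SyncIn s ([SBind p (AIn c); SBind q (AOut c); SFree c] ++ rest)).
    { unfold SyncIn in *. destruct Hx as [H|H]; memb H; simpl; auto 10. }
    destruct (g9 s x a Hx' Ha) as [H|[x' [y' H]]]; unfold ChanPresent.
    + memb H. right. exists p, q. simpl; auto. left. simpl; auto 10.
    + memb H. right. exists x', y'. simpl; auto 10.
Qed.

Lemma wf_IIi p s rest : In p (dom s) -> WellFormed ([SCand p; SOpen s] ++ rest) ->
  WellFormed ([SClosed s; SSelect s p] ++ rest).
Proof.
  intros Hd [g1 g2 g3 g4 g5 g6 g7a g7b g7c g8 g9].
  assert (OCr : forall s0, SyncIn s0 ([SCand p; SOpen s] ++ rest) -> SyncIn s0 ([SClosed s; SSelect s p] ++ rest)).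
  { unfold SyncIn. intros s0 [H|H]; memb H; simpl; auto 10. }
  assert (OCr' : forall s0, SyncIn s0 ([SClosed s; SSelect s p] ++ rest) -> SyncIn s0 ([SCand p; SOpen s] ++ rest)).
  { unfold SyncIn. intros s0 [H|H]; memb H; simpl; auto 10. }
  constructor.
  - simpl in *; auto.
  - simpl in *; auto.
  - simpl in *; auto.
  - intros x a Hx. memb Hx. destruct (g4 x a (in_rest _ _ _ Hx)) as [s0 [H1 H2]]. eauto.
  - intros c x y Hx. memb Hx. destruct (g5 c x y (in_rest _ _ _ Hx)) as [[s1 [H1 H2]] [[s2 [H3 H4]] [H5 H6]]].
    repeat split; eauto; simpl in *; auto.
  - intros x Hx. simpl in Hx.
    destruct (g6 x ltac:(simpl; auto)) as [c [y [H|H]]]; memb H; exists c, y; [left|right]; apply in_rest; auto.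
  - intros s0 x Hx. memb Hx. split; simpl; auto. destruct (g7a s0 x (in_rest _ _ _ Hx)) as [H1 H2]. memb H1.
    split; auto. apply in_rest; auto.
  - intros s0 x Hx. memb Hx. destruct (g7b s0 x (in_rest _ _ _ Hx)) as [H1 H2]. memb H1. split; auto.
    apply in_rest; auto.
  - intros s0 Hx. memb Hx. specialize (g7c s0 (in_rest _ _ _ Hx)). memb g7c. apply in_rest; auto.
  - intros s0 x a Hx Ha. memb Hx. destruct (g8 s0 x a (in_rest _ _ _ Hx) Ha) as [H|H]; memb H; simpl; auto 10.
    exfalso. simpl in g1. eapply nodup_disj; eauto. eapply in_fm; eauto. simpl. eapply in_dom_pair; eauto.
  - intros s0 x a Hx Ha. destruct (g9 s0 x a (OCr' _ Hx) Ha) as [H|[x' [y' H]]]; unfold ChanPresent.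
    + memb H. left. simpl; auto 10.
    + memb H. right. exists x', y'. simpl; auto 10.
Qed.

Lemma wf_IIii p s rest : In p (dom s) -> WellFormed ([SCand p; SClosed s] ++ rest) ->
  WellFormed ([SClosed s; SReject p] ++ rest).
Proof.
  intros Hd [g1 g2 g3 g4 g5 g6 g7a g7b g7c g8 g9].
  assert (OCr : forall s0, SyncIn s0 ([SCand p; SClosed s] ++ rest) -> SyncIn s0 ([SClosed s; SReject p] ++ rest)).
  { unfold SyncIn. intros s0 [H|H]; memb H; simpl; auto 10. }
  assert (OCr' : forall s0, SyncIn s0 ([SClosed s; SReject p] ++ rest) -> SyncIn s0 ([SCand p; SClosed s] ++ rest)).
  { unfold SyncIn. intros s0 [H|H]; memb H; simpl; auto 10. }
  constructor.
  - simpl in *; auto.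
  - simpl in *; auto.
  - simpl in *; auto.
  - intros x a Hx. memb Hx. destruct (g4 x a (in_rest _ _ _ Hx)) as [s0 [H1 H2]]. eauto.
  - intros c x y Hx. memb Hx. destruct (g5 c x y (in_rest _ _ _ Hx)) as [[s1 [H1 H2]] [[s2 [H3 H4]] [H5 H6]]].
    repeat split; eauto; simpl in *; auto.
  - intros x Hx. simpl in Hx.
    destruct (g6 x ltac:(simpl; auto)) as [c [y [H|H]]]; memb H; exists c, y; [left|right]; apply in_rest; auto.
  - intros s0 x Hx. memb Hx. destruct (g7a s0 x (in_rest _ _ _ Hx)) as [H1 H2]. memb H1; split; simpl; auto.
  - intros s0 x Hx. memb Hx. destruct (g7b s0 x (in_rest _ _ _ Hx)) as [H1 H2]. memb H1; split; simpl; auto.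
  - intros s0 Hx. memb Hx. specialize (g7c s0 (in_rest _ _ _ Hx)). memb g7c; simpl; auto.
  - intros s0 x a Hx Ha. memb Hx. destruct (g8 s0 x a (in_rest _ _ _ Hx) Ha) as [H|H]; memb H; simpl; auto 10.
    exfalso. simpl in g1. eapply nodup_disj; eauto. eapply in_fm; eauto. simpl. eapply in_dom_pair; eauto.
  - intros s0 x a Hx Ha. destruct (g9 s0 x a (OCr' _ Hx) Ha) as [H|[x' [y' H]]]; unfold ChanPresent.
    + memb H. left. simpl; auto 10.
    + memb H. right. exists x', y'. simpl; auto 10.
Qed.

Lemma wf_IIIi s s' p q c rest : WellFormed ([SSelect s p; SSelect s' q; SMatch c p q] ++ rest) ->
  WellFormed ([SDone s p; SDone s' q; SFree c] ++ rest).
Proof.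
  intros [g1 g2 g3 g4 g5 g6 g7a g7b g7c g8 g9].
  assert (OCr : forall s0, SyncIn s0 ([SSelect s p; SSelect s' q; SMatch c p q] ++ rest) -> SyncIn s0 ([SDone s p; SDone s' q; SFree c] ++ rest)).
  { unfold SyncIn. intros s0 [H|H]; memb H; simpl; auto 10. }
  assert (OCr' : forall s0, SyncIn s0 ([SDone s p; SDone s' q; SFree c] ++ rest) -> SyncIn s0 rest).
  { unfold SyncIn. intros s0 [H|H]; memb H; simpl; auto 10. }
  simpl in g2, g3. apply nodup_cons2 in g3 as [g3 [Hp3 [Hq3 Hpq]]].
  apply nodup_cons2 in g2 as [g2' [Hp2 [Hq2 _]]].
  assert (Hmn : forall z, In z (flat_map match_points rest) -> z <> p /\ z <> q).
  { intros z Hz. split; intro; subst; auto. }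
  constructor.
  - simpl in *; auto.
  - simpl; constructor; [simpl; intros [E|E]; [congruence|auto]|]. constructor; auto.
  - simpl in *; auto.
  - intros x a Hx. memb Hx. destruct (g4 x a (in_rest _ _ _ Hx)) as [s0 [H1 H2]]. eauto.
  - intros c' x y Hx. memb Hx. destruct (g5 c' x y (in_rest _ _ _ Hx)) as [[s1 [H1 H2]] [[s2 [H3 H4]] [H5 H6]]].
    destruct (match_points_in _ _ _ _ Hx) as [Mx My]. destruct (Hmn _ Mx), (Hmn _ My).
    repeat split; eauto; simpl in *; intuition congruence.
  - intros x Hx. simpl in Hx. destruct (g6 x ltac:(simpl; auto)) as [c' [y [H|H]]]; memb H.
    + exfalso. apply Hp2. apply busy_point_of; auto.
    + exists c', y. left. apply in_rest; auto.
    + exfalso. apply Hq2. apply busy_point_of; auto.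
    + exists c', y. right. apply in_rest; auto.
  - intros s0 x Hx. memb Hx. destruct (g7a s0 x (in_rest _ _ _ Hx)) as [H1 H2]. memb H1; split; simpl; auto 10.
  - intros s0 x Hx. memb Hx.
    + destruct (g7a s0 x ltac:(simpl; auto)) as [H1 H2]. memb H1; split; simpl; auto 10.
    + destruct (g7a s0 x ltac:(simpl; auto)) as [H1 H2]. memb H1; split; simpl; auto 10.
    + destruct (g7b s0 x (in_rest _ _ _ Hx)) as [H1 H2]. memb H1; split; simpl; auto 10.
  - intros s0 Hx. memb Hx. specialize (g7c s0 (in_rest _ _ _ Hx)). memb g7c; simpl; auto 10.
  - intros s0 x a Hx Ha. memb Hx. destruct (g8 s0 x a (in_rest _ _ _ Hx) Ha) as [H|H]; memb H; simpl; auto 10.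
  - intros s0 x a Hx Ha.
    destruct (g9 s0 x a ltac:(apply OCr' in Hx; unfold SyncIn in *; simpl; tauto) Ha) as [H|[x' [y' H]]]; unfold ChanPresent.
    + memb H. left. simpl; auto 10.
    + memb H. left; simpl; auto. right. exists x', y'. simpl; auto 10.
Qed.

Lemma wf_IIIii s p q c rest : WellFormed ([SSelect s p; SReject q; SMatch c p q] ++ rest) ->
  WellFormed ([SRetry s; SFree c] ++ rest).
Proof.
  intros [g1 g2 g3 g4 g5 g6 g7a g7b g7c g8 g9].
  assert (OCr : forall s0, SyncIn s0 ([SSelect s p; SReject q; SMatch c p q] ++ rest) -> SyncIn s0 ([SRetry s; SFree c] ++ rest)).
  { unfold SyncIn. intros s0 [H|H]; memb H; simpl; auto 10. }
  assert (OCr' : forall s0, SyncIn s0 ([SRetry s; SFree c] ++ rest) -> SyncIn s0 rest).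
  { unfold SyncIn. intros s0 [H|H]; memb H; simpl; auto 10. }
  simpl in g2, g3. apply nodup_cons2 in g3 as [g3 [Hp3 [Hq3 Hpq]]].
  apply nodup_cons2 in g2 as [g2' [Hp2 [Hq2 _]]].
  assert (Hmn : forall z, In z (flat_map match_points rest) -> z <> p /\ z <> q).
  { intros z Hz. split; intro; subst; auto. }
  constructor.
  - simpl in *; auto.
  - simpl; auto.
  - simpl in *; auto.
  - intros x a Hx. memb Hx. destruct (g4 x a (in_rest _ _ _ Hx)) as [s0 [H1 H2]]. eauto.
  - intros c' x y Hx. memb Hx. destruct (g5 c' x y (in_rest _ _ _ Hx)) as [[s1 [H1 H2]] [[s2 [H3 H4]] [H5 H6]]].
    destruct (match_points_in _ _ _ _ Hx) as [Mx My]. destruct (Hmn _ Mx), (Hmn _ My).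
    repeat split; eauto; simpl in *; intuition congruence.
  - intros x Hx. simpl in Hx. destruct (g6 x ltac:(simpl; auto)) as [c' [y [H|H]]]; memb H.
    + exfalso. apply Hp2. apply busy_point_of; auto.
    + exists c', y. left. apply in_rest; auto.
    + exfalso. apply Hq2. apply busy_point_of; auto.
    + exists c', y. right. apply in_rest; auto.
  - intros s0 x Hx. memb Hx. destruct (g7a s0 x (in_rest _ _ _ Hx)) as [H1 H2]. memb H1; split; simpl; auto 10.
  - intros s0 x Hx. memb Hx. destruct (g7b s0 x (in_rest _ _ _ Hx)) as [H1 H2]. memb H1; split; simpl; auto 10.
  - intros s0 Hx. memb Hx.
    + destruct (g7a s0 p ltac:(simpl; auto)) as [H1 H2]. memb H1; simpl; auto 10.
    + specialize (g7c s0 (in_rest _ _ _ Hx)). memb g7c; simpl; auto 10.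
  - intros s0 x a Hx Ha. memb Hx. destruct (g8 s0 x a (in_rest _ _ _ Hx) Ha) as [H|H]; memb H; simpl; auto 10.
  - intros s0 x a Hx Ha.
    destruct (g9 s0 x a ltac:(apply OCr' in Hx; unfold SyncIn in *; simpl; tauto) Ha) as [H|[x' [y' H]]]; unfold ChanPresent.
    + memb H. left. simpl; auto 10.
    + memb H. left; simpl; auto. right. exists x', y'. simpl; auto 10.
Qed.

Lemma wf_IIIiii s p q c rest : WellFormed ([SReject p; SSelect s q; SMatch c p q] ++ rest) ->
  WellFormed ([SRetry s; SFree c] ++ rest).
Proof.
  intros [g1 g2 g3 g4 g5 g6 g7a g7b g7c g8 g9].
  assert (OCr : forall s0, SyncIn s0 ([SReject p; SSelect s q; SMatch c p q] ++ rest) -> SyncIn s0 ([SRetry s; SFree c] ++ rest)).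
  { unfold SyncIn. intros s0 [H|H]; memb H; simpl; auto 10. }
  assert (OCr' : forall s0, SyncIn s0 ([SRetry s; SFree c] ++ rest) -> SyncIn s0 rest).
  { unfold SyncIn. intros s0 [H|H]; memb H; simpl; auto 10. }
  simpl in g2, g3. apply nodup_cons2 in g3 as [g3 [Hp3 [Hq3 Hpq]]].
  apply nodup_cons2 in g2 as [g2' [Hp2 [Hq2 _]]].
  assert (Hmn : forall z, In z (flat_map match_points rest) -> z <> p /\ z <> q).
  { intros z Hz. split; intro; subst; auto. }
  constructor.
  - simpl in *; auto.
  - simpl; auto.
  - simpl in *; auto.
  - intros x a Hx. memb Hx. destruct (g4 x a (in_rest _ _ _ Hx)) as [s0 [H1 H2]]. eauto.
  - intros c' x y Hx. memb Hx. destruct (g5 c' x y (in_rest _ _ _ Hx)) as [[s1 [H1 H2]] [[s2 [H3 H4]] [H5 H6]]].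
    destruct (match_points_in _ _ _ _ Hx) as [Mx My]. destruct (Hmn _ Mx), (Hmn _ My).
    repeat split; eauto; simpl in *; intuition congruence.
  - intros x Hx. simpl in Hx. destruct (g6 x ltac:(simpl; auto)) as [c' [y [H|H]]]; memb H.
    + exfalso. apply Hp2. apply busy_point_of; auto.
    + exists c', y. left. apply in_rest; auto.
    + exfalso. apply Hq2. apply busy_point_of; auto.
    + exists c', y. right. apply in_rest; auto.
  - intros s0 x Hx. memb Hx. destruct (g7a s0 x (in_rest _ _ _ Hx)) as [H1 H2]. memb H1; split; simpl; auto 10.
  - intros s0 x Hx. memb Hx. destruct (g7b s0 x (in_rest _ _ _ Hx)) as [H1 H2]. memb H1; split; simpl; auto 10.
  - intros s0 Hx. memb Hx.
    + destruct (g7a s0 q ltac:(simpl; auto)) as [H1 H2]. memb H1; simpl; auto 10.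
    + specialize (g7c s0 (in_rest _ _ _ Hx)). memb g7c; simpl; auto 10.
  - intros s0 x a Hx Ha. memb Hx. destruct (g8 s0 x a (in_rest _ _ _ Hx) Ha) as [H|H]; memb H; simpl; auto 10.
  - intros s0 x a Hx Ha.
    destruct (g9 s0 x a ltac:(apply OCr' in Hx; unfold SyncIn in *; simpl; tauto) Ha) as [H|[x' [y' H]]]; unfold ChanPresent.
    + memb H. left. simpl; auto 10.
    + memb H. left; simpl; auto. right. exists x', y'. simpl; auto 10.
Qed.

Lemma wf_IIIiv p q c rest : WellFormed ([SReject p; SReject q; SMatch c p q] ++ rest) ->
  WellFormed ([SFree c] ++ rest).
Proof.
  intros [g1 g2 g3 g4 g5 g6 g7a g7b g7c g8 g9].
  assert (OCr : forall s0, SyncIn s0 ([SReject p; SReject q; SMatch c p q] ++ rest) -> SyncIn s0 ([SFree c] ++ rest)).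
  { unfold SyncIn. intros s0 [H|H]; memb H; simpl; auto 10. }
  assert (OCr' : forall s0, SyncIn s0 ([SFree c] ++ rest) -> SyncIn s0 rest).
  { unfold SyncIn. intros s0 [H|H]; memb H; simpl; auto 10. }
  simpl in g2, g3. apply nodup_cons2 in g3 as [g3 [Hp3 [Hq3 Hpq]]].
  apply nodup_cons2 in g2 as [g2' [Hp2 [Hq2 _]]].
  assert (Hmn : forall z, In z (flat_map match_points rest) -> z <> p /\ z <> q).
  { intros z Hz. split; intro; subst; auto. }
  constructor.
  - simpl in *; auto.
  - simpl; auto.
  - simpl in *; auto.
  - intros x a Hx. memb Hx. destruct (g4 x a (in_rest _ _ _ Hx)) as [s0 [H1 H2]]. eauto.
  - intros c' x y Hx. memb Hx. destruct (g5 c' x y (in_rest _ _ _ Hx)) as [[s1 [H1 H2]] [[s2 [H3 H4]] [H5 H6]]].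
    destruct (match_points_in _ _ _ _ Hx) as [Mx My]. destruct (Hmn _ Mx), (Hmn _ My).
    repeat split; eauto; simpl in *; intuition congruence.
  - intros x Hx. simpl in Hx. destruct (g6 x ltac:(simpl; auto)) as [c' [y [H|H]]]; memb H.
    + exfalso. apply Hp2. apply busy_point_of; auto.
    + exists c', y. left. apply in_rest; auto.
    + exfalso. apply Hq2. apply busy_point_of; auto.
    + exists c', y. right. apply in_rest; auto.
  - intros s0 x Hx. memb Hx. destruct (g7a s0 x (in_rest _ _ _ Hx)) as [H1 H2]. memb H1; split; simpl; auto 10.
  - intros s0 x Hx. memb Hx. destruct (g7b s0 x (in_rest _ _ _ Hx)) as [H1 H2]. memb H1; split; simpl; auto 10.
  - intros s0 Hx. memb Hx. specialize (g7c s0 (in_rest _ _ _ Hx)). memb g7c; simpl; auto 10.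
  - intros s0 x a Hx Ha. memb Hx. destruct (g8 s0 x a (in_rest _ _ _ Hx) Ha) as [H|H]; memb H; simpl; auto 10.
  - intros s0 x a Hx Ha.
    destruct (g9 s0 x a ltac:(apply OCr' in Hx; unfold SyncIn in *; simpl; tauto) Ha) as [H|[x' [y' H]]]; unfold ChanPresent.
    + memb H. left. simpl; auto 10.
    + memb H. left; simpl; auto. right. exists x', y'. simpl; auto 10.
Qed.

Lemma wf_IVi s p a rest : WellFormed ([SDone s p] ++ rest) -> WellFormed ([SAct a] ++ rest).
Proof.
  intros [g1 g2 g3 g4 g5 g6 g7a g7b g7c g8 g9].
  assert (OCr : forall s0, SyncIn s0 ([SDone s p] ++ rest) -> SyncIn s0 ([SAct a] ++ rest)).
  { unfold SyncIn. intros s0 [H|H]; memb H; simpl; auto 10. }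
  assert (OCr' : forall s0, SyncIn s0 ([SAct a] ++ rest) -> SyncIn s0 ([SDone s p] ++ rest)).
  { unfold SyncIn. intros s0 [H|H]; memb H; simpl; auto 10. }
  simpl in g2. apply NoDup_cons_iff in g2 as [_ g2].
  constructor.
  - simpl in *; auto.
  - simpl; auto.
  - simpl in *; auto.
  - intros x a' Hx. memb Hx. destruct (g4 x a' (in_rest _ _ _ Hx)) as [s0 [H1 H2]]. eauto.
  - intros c' x y Hx. memb Hx. destruct (g5 c' x y (in_rest _ _ _ Hx)) as [[s1 [H1 H2]] [[s2 [H3 H4]] [H5 H6]]].
    repeat split; eauto; simpl in *; intuition congruence.
  - intros x Hx. simpl in Hx. destruct (g6 x ltac:(simpl; auto)) as [c' [y [H|H]]]; memb H;
    exists c', y; [left|right]; apply in_rest; auto.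
  - intros s0 x Hx. memb Hx. destruct (g7a s0 x (in_rest _ _ _ Hx)) as [H1 H2]. memb H1; split; simpl; auto 10.
  - intros s0 x Hx. memb Hx. destruct (g7b s0 x (in_rest _ _ _ Hx)) as [H1 H2]. memb H1; split; simpl; auto 10.
  - intros s0 Hx. memb Hx. specialize (g7c s0 (in_rest _ _ _ Hx)). memb g7c; simpl; auto 10.
  - intros s0 x a' Hx Ha. memb Hx. destruct (g8 s0 x a' (in_rest _ _ _ Hx) Ha) as [H|H]; memb H; simpl; auto 10.
  - intros s0 x a' Hx Ha. destruct (g9 s0 x a' (OCr' _ Hx) Ha) as [H|[x' [y' H]]]; unfold ChanPresent.
    + memb H. left. simpl; auto 10.
    + memb H. right. exists x', y'. simpl; auto 10.
Qed.

(* The retry rule preserves well-formedness, thanks to its fresh points. *)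
Lemma fm_binds_nil (f : sub -> list nat) s : (forall p a, f (SBind p a) = []) -> flat_map f (binds s) = [].
Proof. intro H. induction s as [|[p a] s IH]; simpl; auto. rewrite H, IH. auto. Qed.

Lemma fm_binds_points s : flat_map point_of (binds s) = dom s.
Proof. induction s as [|[p a] s IH]; simpl; auto. rewrite IH. auto. Qed.

Lemma in_binds x s : In x (binds s) -> exists p a, x = SBind p a /\ In (p, a) s.
Proof. unfold binds. intro H. apply in_map_iff in H as [[p a] [E H]]. subst. eauto. Qed.

Lemma binds_in p a s : In (p, a) s -> In (SBind p a) (binds s).
Proof. intro H. unfold binds. apply in_map_iff. exists (p,a); auto. Qed.

Lemma fm_names (f : sub -> list nat) L n : (forall x, incl (f x) (sub_fn x)) ->
  In n (flat_map f L) -> In n (names L).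
Proof. intros Hf H. apply in_flat_map in H as [x [Hx Hn]]. eapply in_names; eauto. apply Hf; auto. Qed.

Lemma sync_dom_fn x : incl (sync_dom x) (sub_fn x).
Proof. destruct x; simpl; intros n H; auto; contradiction. Qed.

Lemma point_of_fn x : incl (point_of x) (sub_fn x).
Proof. destruct x; simpl; intros n H; auto; try contradiction; destruct H as [H|[]]; subst; simpl; auto. Qed.

Ltac memb2 H := simpl in H; destruct H as [H|H]; [try discriminate H; try (injection H; intros; subst)|
  apply in_app_iff in H; destruct H as [H|H]; [let p := fresh "p" in let a := fresh "a" in
    let E := fresh "E" in let Hpa := fresh "Hpa" in
    apply in_binds in H as [p [a [E Hpa]]]; try discriminate E; try (injection E; intros; subst) |]].

Lemma wf_IVii s s' rest : map snd s' = map snd s -> (NoDup (dom s) -> NoDup (dom s')) ->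
  (forall n, In n (dom s') -> ~ In n (names rest)) ->
  WellFormed ([SRetry s] ++ rest) -> WellFormed ((SOpen s' :: binds s') ++ rest).
Proof.
  intros Hsnd Hnd Hfr [g1 g2 g3 g4 g5 g6 g7a g7b g7c g8 g9].
  assert (Hcl : In (SClosed s) rest) by (specialize (g7c s ltac:(simpl; auto)); memb g7c; auto).
  assert (Nds : NoDup (dom s')) by (apply Hnd; simpl in g1; apply (nodup_item sync_dom rest (SClosed s)); auto).
  assert (OCr : forall s0, SyncIn s0 ([SRetry s] ++ rest) -> SyncIn s0 ((SOpen s' :: binds s') ++ rest)).
  { unfold SyncIn. intros s0 [H|H]; memb H; [left|right]; simpl; right; apply in_or_app; auto. }
  assert (Fr : forall c, ChanPresent c ([SRetry s] ++ rest) -> ChanPresent c ((SOpen s' :: binds s') ++ rest)).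
  { unfold ChanPresent. intros c [H|[x [y H]]]; memb H; [left|right; exists x, y]; simpl; right; apply in_or_app; auto. }
  simpl in g1, g2, g3.
  constructor.
  - simpl. rewrite flat_map_app, fm_binds_nil by auto. simpl. apply NoDup_app; auto.
    intros n H1 H2. apply (Hfr n H1). eapply fm_names; eauto. apply sync_dom_fn.
  - simpl. rewrite flat_map_app, fm_binds_points. apply NoDup_app; auto.
    intros n H1 H2. apply (Hfr n H1). eapply fm_names; eauto. apply point_of_fn.
  - simpl. rewrite flat_map_app, fm_binds_nil by auto. simpl. auto.
  - intros x a Hx. memb2 Hx.
    + exists s'. split; auto. left. simpl; auto.
    + destruct (g4 x a (in_rest _ _ _ Hx)) as [s0 [H1 H2]]. eauto.
  - intros c x y Hx. memb2 Hx. destruct (g5 c x y (in_rest _ _ _ Hx)) as [[s1 [H1 H2]] [[s2 [H3 H4]] [H5 H6]]].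
    simpl in H5, H6. repeat split; eauto; simpl; rewrite flat_map_app, fm_binds_nil by auto; auto.
  - intros x Hx. simpl in Hx. rewrite flat_map_app, fm_binds_nil in Hx by auto. simpl in Hx.
    destruct (g6 x ltac:(simpl; auto)) as [c' [y [H|H]]]; memb H; exists c', y; [left|right];
    simpl; right; apply in_or_app; auto.
  - intros s0 x Hx. memb2 Hx. destruct (g7a s0 x (in_rest _ _ _ Hx)) as [H1 H2]. memb H1. split; auto.
    simpl; right; apply in_or_app; auto.
  - intros s0 x Hx. memb2 Hx. destruct (g7b s0 x (in_rest _ _ _ Hx)) as [H1 H2]. memb H1. split; auto.
    simpl; right; apply in_or_app; auto.
  - intros s0 Hx. memb2 Hx. specialize (g7c s0 (in_rest _ _ _ Hx)). memb g7c. simpl; right; apply in_or_app; auto.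
  - intros s0 x a Hx Ha. memb2 Hx.
    + left. simpl. right. apply in_or_app. left. apply binds_in; auto.
    + destruct (g8 s0 x a (in_rest _ _ _ Hx) Ha) as [H|H]; memb H; [left|right]; simpl; right; apply in_or_app; auto.
  - intros s0 x a Hx Ha. destruct Hx as [Hx|Hx].
    + memb2 Hx.
      * assert (Hin : In a (map snd s)) by (rewrite <- Hsnd; apply in_map_iff; exists (x,a); auto).
        apply in_map_iff in Hin as [[x0 a0] [E Hin]]. simpl in E. subst a.
        apply Fr. apply (g9 s x0 a0); auto. right. simpl; auto.
      * apply Fr. apply (g9 s0 x a); auto. left. simpl; auto.
    + memb2 Hx. apply Fr. apply (g9 s0 x a); auto. right. simpl; auto.
Qed.

Lemma wf_step L L' : WellFormed L -> FlatStep [] L L' -> WellFormed L'.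
Proof.
  intros HG [lhs [rhs [rest [HR [P1 P2]]]]].
  apply (wf_perm _ _ HG) in P1. eapply wf_perm; [|apply Permutation_sym; eauto].
  destruct HR as [HR|[s [s' [E1 [E2 [E3 [E4 E5]]]]]]].
  - destruct HR.
    + apply wf_I; auto.
    + apply wf_IIi; auto.
    + apply wf_IIii; auto.
    + apply wf_IIIi; auto.
    + eapply wf_IIIii; eauto.
    + eapply wf_IIIiii; eauto.
    + eapply wf_IIIiv; eauto.
    + eapply wf_IVi; eauto.
  - subst. apply (wf_IVii s); auto.
Qed.

(* The action bound to a point by a synchronizer; well-formedness makes it unique. *)
Definition lookup_action (x : nat) (s : sync) : action :=
  match find (fun pa => Nat.eqb (fst pa) x) s with Some pa => snd pa | None => AIn 0 end.

Lemma nodup_fst (s : sync) x a a' : NoDup (dom s) -> In (x, a) s -> In (x, a') s -> a = a'.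
Proof.
  induction s as [|[y b] s IH]; simpl; intros Hn H1 H2; [contradiction|].
  inversion Hn; subst. destruct H1 as [E1|H1]; destruct H2 as [E2|H2].
  - congruence.
  - injection E1; intros; subst. exfalso; apply H3. eapply in_dom_pair; eauto.
  - injection E2; intros; subst. exfalso; apply H3. eapply in_dom_pair; eauto.
  - eauto.
Qed.

Lemma lookup_spec x a s : NoDup (dom s) -> In (x, a) s -> lookup_action x s = a.
Proof.
  intros Hn H. unfold lookup_action. destruct (find (fun pa => Nat.eqb (fst pa) x) s) as [[y b]|] eqn:E.
  - apply find_some in E as [E1 E2]. simpl in *. apply Nat.eqb_eq in E2. subst. simpl. eapply nodup_fst; eauto.
  - eapply find_none in E; eauto. simpl in E. rewrite Nat.eqb_refl in E. discriminate.
Qed.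

Definition abs_sub (x : sub) : program :=
  match x with
  | SOpen s | SSelect s _ | SRetry s => [CSel (map snd s)]
  | SDone s p => [CAct (lookup_action p s)]
  | SAct a => [CAct a]
  | _ => []
  end.

Definition abstr (L : list sub) : program := flat_map abs_sub L.

Lemma abstr_app L1 L2 : abstr (L1 ++ L2) = abstr L1 ++ abstr L2.
Proof. apply flat_map_app. Qed.

Lemma abstr_perm L L' : Permutation L L' -> Permutation (abstr L) (abstr L').
Proof. apply Permutation_flat_map. Qed.

Lemma abstr_binds s : abstr (binds s) = [].
Proof. induction s as [|[p a] s IH]; simpl; auto. Qed.

Lemma preduce_perm P P' Q Q' : preduce P Q -> Permutation P P' -> Permutation Q Q' -> preduce P' Q'.
Proof.
  intros [al [be [c [r [H1 [H2 [H3 H4]]]]]]] P1 P2. exists al, be, c, r. repeat split; auto.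
  eapply Permutation_trans; [apply Permutation_sym|]; eauto.
  eapply Permutation_trans; [apply Permutation_sym|]; eauto.
Qed.

Lemma wf_closed_owner L s s1 p : WellFormed L -> In (SClosed s) L -> SyncIn s1 L ->
  In p (dom s) -> In p (dom s1) -> s = s1.
Proof.
  intros HG Hc H1 Hp Hp1. destruct H1 as [H1|H1];
    [assert (SClosed s = SOpen s1) | assert (SClosed s = SClosed s1)];
    try (eapply (flat_map_unique sync_dom); eauto using wf_syncs); congruence.
Qed.

Lemma abstr_IIIi L L' s s' p q c rest : WellFormed L ->
  Permutation L ([SSelect s p; SSelect s' q; SMatch c p q] ++ rest) ->
  Permutation L' ([SDone s p; SDone s' q; SFree c] ++ rest) -> preduce (abstr L) (abstr L').
Proof.
  intros HG P1 P2. apply (wf_perm _ _ HG) in P1 as HG'.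
  destruct (wf_match_owned _ HG' c p q ltac:(simpl; auto)) as [[s1 [H1 H2]] [[s2 [H3 H4]] _]].
  destruct (wf_select_closed _ HG' s p ltac:(simpl; auto)) as [C1 D1].
  destruct (wf_select_closed _ HG' s' q ltac:(simpl; auto)) as [C2 D2].
  rewrite <- (wf_closed_owner _ _ _ _ HG' C1 H1 D1 (in_dom_pair _ _ _ H2)) in H2.
  rewrite <- (wf_closed_owner _ _ _ _ HG' C2 H3 D2 (in_dom_pair _ _ _ H4)) in H4.
  assert (N1 : NoDup (dom s)) by (apply (nodup_item sync_dom _ _ (wf_syncs _ HG') C1)).
  assert (N2 : NoDup (dom s')) by (apply (nodup_item sync_dom _ _ (wf_syncs _ HG') C2)).
  exists (map snd s), (map snd s'), c, (abstr rest). repeat split.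
  - eapply Permutation_trans. apply abstr_perm; eauto. simpl. auto.
  - apply in_map_iff. exists (p, AIn c); auto.
  - apply in_map_iff. exists (q, AOut c); auto.
  - eapply Permutation_trans. apply abstr_perm; eauto. simpl.
    rewrite (lookup_spec p (AIn c) s), (lookup_spec q (AOut c) s'); auto.
Qed.

Lemma abstr_step L L' : WellFormed L -> FlatStep [] L L' ->
  Permutation (abstr L) (abstr L') \/ preduce (abstr L) (abstr L').
Proof.
  intros HG [lhs [rhs [rest [HR [P1 P2]]]]].
  apply (wf_perm _ _ HG) in P1 as HG'.
  assert (K : Permutation (abstr (lhs ++ rest)) (abstr (rhs ++ rest)) \/
              preduce (abstr (lhs ++ rest)) (abstr (rhs ++ rest))).
  { destruct HR as [HR|[s [s' [E1 [E2 [E3 [E4 E5]]]]]]].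
    - destruct HR; try (left; simpl; auto; fail).
      + right. apply (abstr_IIIi _ _ s s' p q c rest HG'); auto.
      + left. simpl. destruct (wf_done_closed _ HG' s p ltac:(simpl; auto)) as [C1 D1].
        rewrite (lookup_spec p a s); auto. apply (nodup_item sync_dom _ _ (wf_syncs _ HG') C1).
    - subst. left. simpl. rewrite abstr_app, abstr_binds. simpl. rewrite E3. auto. }
  destruct K as [K|K]; [left|right].
  - eapply Permutation_trans; [apply abstr_perm; eauto|].
    eapply Permutation_trans; eauto. apply abstr_perm, Permutation_sym; auto.
  - eapply preduce_perm; eauto; apply abstr_perm, Permutation_sym; auto.
Qed.

Lemma fire_base a L lhs rhs rest : Flat a L -> WellFormed L -> Permutation L (lhs ++ rest) ->
  BaseRule lhs rhs ->
  exists a' L', mstep a a' /\ Flat a' L' /\ WellFormed L' /\ Permutation L' (rhs ++ rest) /\ FlatStep [] L L'.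
Proof.
  intros HI HG HP HR. destruct (fire_base_raw a L lhs rhs rest HI HP HR) as [a' [L' [H1 [H2 H3]]]].
  assert (HA : FlatStep [] L L'). { exists lhs, rhs, rest. repeat split; auto. left; auto. }
  assert (HG' : WellFormed L') by (eapply wf_step; eauto).
  exists a', L'. auto.
Qed.

Lemma fire_retry a L s rest : Flat a L -> WellFormed L -> Permutation L (SRetry s :: rest) ->
  exists a' L' s', mstep a a' /\ Flat a' L' /\ WellFormed L' /\ Permutation L' (SOpen s' :: binds s' ++ rest) /\
    FlatStep [] L L' /\ map snd s' = map snd s.
Proof.
  intros HI HG HP. destruct (fire_retry_raw a L s rest HI HP) as [a' [L' [s' [H1 [H2 [H3 [H4 [H5 H6]]]]]]]].
  assert (HA : FlatStep [] L L').
  { exists [SRetry s], (SOpen s' :: binds s'), rest. repeat split; auto. right.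
    exists s, s'. repeat split; auto. intros n Hn Hc. apply (H6 n Hn). simpl in Hc.
    apply (perm_in_names _ _ _ (Permutation_sym HP)). simpl. unfold names. simpl. apply in_or_app. auto. }
  assert (HG' : WellFormed L') by (eapply wf_step; eauto).
  exists a', L', s'. repeat apply conj; auto.
Qed.

Definition Sim (P : program) (st : state) : Prop :=
  exists L, Flat st L /\ WellFormed L /\ Permutation P (abstr L).

Lemma perm_extract {A} (x : A) L : In x L -> exists rest, Permutation L (x :: rest).
Proof. intro H. apply in_split in H as [l1 [l2 E]]. subst. exists (l1 ++ l2). apply Permutation_sym, Permutation_middle. Qed.

Lemma den_sub_ren f x : den_sub (ren f x) = den_sub x.
Proof. destruct x; reflexivity. Qed.

Lemma den_flat a L : Flat a L -> den_state a = flat_map den_sub L.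
Proof.
  induction 1; simpl.
  - unfold enc. rewrite den_sub_ren. rewrite app_nil_r. auto.
  - rewrite flat_map_app. congruence.
  - rewrite IHFlat. clear. induction La; simpl; auto. rewrite den_sub_ren, IHLa. auto.
Qed.

Lemma den_prog_app P Q : den_prog (P ++ Q) = den_prog P ++ den_prog Q.
Proof. apply flat_map_app. Qed.

Lemma den_prog_perm P Q : Permutation P Q -> Permutation (den_prog P) (den_prog Q).
Proof. apply Permutation_flat_map. Qed.

Lemma perm_filter {A} (f : A -> bool) l l' : Permutation l l' -> Permutation (filter f l) (filter f l').
Proof.
  induction 1; simpl; auto.
  - destruct (f x); auto.
  - destruct (f x), (f y); auto. apply perm_swap.
  - eapply Permutation_trans; eauto.
Qed.

Definition isDone (x : sub) : bool := match x with SDone _ _ => true | _ => false end.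

Lemma in_dom_ex x s : In x (dom s) -> exists a, In (x, a) s.
Proof. unfold dom. intro H. apply in_map_iff in H as [[y a] [E H]]. simpl in E. subst. eauto. Qed.

Lemma den_quiet a L : Flat a L -> find isDone L = None -> den_prog (abstr L) = den_state a.
Proof.
  intros HI Ef. rewrite (den_flat _ _ HI). clear - Ef. induction L as [|x L IH]; simpl in *; auto.
  destruct x; simpl in *; try discriminate; rewrite ?den_prog_app; rewrite IH; auto.
Qed.

Lemma correspondence n : forall L a, length (filter isDone L) <= n -> Flat a L -> WellFormed L ->
  exists a', mstar a a' /\ Permutation (den_prog (abstr L)) (den_state a').
Proof.
  induction n as [|n IH]; intros L a Hn HI HG;
    (destruct (find isDone L) as [y|] eqn:Ef;
     [apply find_some in Ef as [Hy Hd]; destruct y; try discriminate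
     | exists a; split; [constructor | rewrite (den_quiet a L HI Ef); auto]]).
  - exfalso. apply perm_extract in Hy as [rest P]. apply (perm_filter isDone) in P.
    apply Permutation_length in P. simpl in P. lia.
  - destruct (wf_done_closed _ HG s p Hy) as [Hc Hd']. apply in_dom_ex in Hd' as [act Ha].
    apply perm_extract in Hy as [rest P].
    destruct (fire_base a L [SDone s p] [SAct act] rest HI HG P (base_IVi s p act Ha))
      as [a1 [L1 [S1 [I1 [G1 [P1 _]]]]]].
    assert (Hl : length (filter isDone L1) <= n).
    { apply (perm_filter isDone) in P, P1. apply Permutation_length in P, P1. simpl in P, P1. lia. }
    destruct (IH L1 a1 Hl I1 G1) as [a' [M1 D1]]. exists a'. split; [econstructor; eauto|].
    eapply Permutation_trans; [|apply D1]. apply den_prog_perm.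
    eapply Permutation_trans; [apply abstr_perm; eauto|].
    eapply Permutation_trans; [|apply abstr_perm, Permutation_sym; eauto].
    simpl. rewrite (lookup_spec p act s); auto. apply (nodup_item sync_dom _ _ (wf_syncs _ HG) Hc).
Qed.

Lemma safety P a L a' : Flat a L -> WellFormed L -> Permutation P (abstr L) -> mstep a a' ->
  exists P', pstar P P' /\ Sim P' a'.
Proof.
  intros HI HG HP HS. destruct (mstep_flat a a' HS [] L HI) as [L' [HI' [HA _]]].
  assert (HG' : WellFormed L') by (eapply wf_step; eauto).
  destruct (abstr_step L L' HG HA) as [K|K].
  - exists P. split. constructor. exists L'. repeat apply conj; auto. eapply Permutation_trans; eauto.
  - exists (abstr L'). split. econstructor; [|constructor]. eapply preduce_perm; eauto.
    apply Permutation_sym; auto.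
    exists L'. repeat apply conj; auto.
Qed.

(* Pending work: three per match, one per candidate and per retry.  Every
   silent step used by Progress lowers it. *)
Definition isCand (x : sub) : bool := match x with SCand _ => true | _ => false end.

Definition isMatch (x : sub) : bool := match x with SMatch _ _ _ => true | _ => false end.

Definition isRetry (x : sub) : bool := match x with SRetry _ => true | _ => false end.

Definition count_kind (f : sub -> bool) (L : list sub) : nat := length (filter f L).

Definition pending (L : list sub) : nat := 3 * count_kind isMatch L + count_kind isCand L + count_kind isRetry L.

Lemma count_kind_perm f L L' : Permutation L L' -> count_kind f L = count_kind f L'.
Proof. intro P. unfold count_kind. apply Permutation_length, perm_filter; auto. Qed.

Lemma count_kind_app f l1 l2 : count_kind f (l1 ++ l2) = count_kind f l1 + count_kind f l2.
Proof. unfold count_kind. rewrite filter_app, length_app. auto. Qed.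

Lemma pending_perm L L' : Permutation L L' -> pending L = pending L'.
Proof. intro P. unfold pending. rewrite !(count_kind_perm _ _ _ P). auto. Qed.

Lemma pending_app l1 l2 : pending (l1 ++ l2) = pending l1 + pending l2.
Proof. unfold pending. rewrite !count_kind_app. lia. Qed.

Lemma pending_binds s : pending (binds s) = 0.
Proof. induction s as [|[p a] s IH]; auto. Qed.

Lemma abstr_silent L L' lhs rhs rest : Permutation L (lhs ++ rest) -> Permutation L' (rhs ++ rest) ->
  abstr lhs = abstr rhs -> Permutation (abstr L) (abstr L').
Proof.
  intros P1 P2 E. eapply Permutation_trans. apply abstr_perm; eauto. rewrite abstr_app, E, <- abstr_app.
  apply abstr_perm, Permutation_sym; auto.
Qed.

Lemma carry (L L' lhs rhs rest : list sub) (z : sub) : Permutation L (lhs ++ rest) ->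
  Permutation L' (rhs ++ rest) ->
  In z L -> ~ In z lhs -> In z L'.
Proof.
  intros P1 P2 H1 H2. apply (Permutation_in _ P1) in H1. apply in_app_or in H1 as [H1|H1]; [contradiction|].
  apply (Permutation_in _ (Permutation_sym P2)). apply in_or_app; auto.
Qed.

Lemma extract2 (x y : sub) L : In x L -> In y L -> x <> y -> exists rest, Permutation L ([x; y] ++ rest).
Proof.
  intros Hx Hy N. apply perm_extract in Hx as [u Pu]. assert (In y u).
  { apply (Permutation_in _ Pu) in Hy. destruct Hy; auto. congruence. }
  apply perm_extract in H as [r Pr]. exists r. simpl. eapply Permutation_trans; eauto.
Qed.

Lemma extract3 (x y z : sub) L : In x L -> In y L -> In z L -> x <> y -> x <> z -> y <> z ->
  exists rest, Permutation L ([x; y; z] ++ rest).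
Proof.
  intros Hx Hy Hz N1 N2 N3. apply perm_extract in Hx as [u Pu].
  assert (Hy' : In y u) by (apply (Permutation_in _ Pu) in Hy; destruct Hy; auto; congruence).
  assert (Hz' : In z u) by (apply (Permutation_in _ Pu) in Hz; destruct Hz; auto; congruence).
  destruct (extract2 y z u Hy' Hz' N3) as [r Pr]. exists r. simpl in *. eapply Permutation_trans; eauto.
Qed.

Lemma mplus_cons a b c : mstep a b -> mplus b c -> mplus a c.
Proof. intros H [d [H1 H2]]. exists b. split; auto. econstructor; eauto. Qed.

Lemma two_opens L al be r : (forall s x, ~ In (SSelect s x) L) -> (forall s, ~ In (SRetry s) L) ->
  Permutation (abstr L) (CSel al :: CSel be :: r) ->
  exists s1 s2 rest, Permutation L (SOpen s1 :: SOpen s2 :: rest) /\ al = map snd s1 /\ be = map snd s2.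
Proof.
  intros HS HR HP.
  assert (Hone : forall L0 b r0, (forall s x, ~ In (SSelect s x) L0) -> (forall s, ~ In (SRetry s) L0) ->
            Permutation (abstr L0) (CSel b :: r0) ->
            exists s1 L1, Permutation L0 (SOpen s1 :: L1) /\ b = map snd s1 /\ Permutation (abstr L1) r0).
  { intros L0 b r0 H1 H2 H3. assert (Hin : In (CSel b) (abstr L0)) by (apply (Permutation_in _ (Permutation_sym H3)); simpl; auto).
    apply in_flat_map in Hin as [y [Hy Hb]].
    destruct y; simpl in Hb; try (destruct Hb as [Hb|[]]; discriminate); try contradiction.
    - destruct Hb as [Hb|[]]. injection Hb as Hb. try subst b. try subst. apply perm_extract in Hy as [L1 PL].
      exists s, L1. repeat split; auto.
      apply (Permutation_cons_inv (a := CSel (map snd s))). eapply Permutation_trans; [|apply H3].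
      apply Permutation_sym. change (CSel (map snd s) :: abstr L1) with (abstr (SOpen s :: L1)).
      apply abstr_perm; auto.
    - exfalso; eapply H1; eauto.
    - exfalso; eapply H2; eauto. }
  destruct (Hone L al (CSel be :: r) HS HR HP) as [s1 [L1 [P1 [E1 P1']]]].
  assert (HS1 : forall s x, ~ In (SSelect s x) L1) by (intros s x H; apply (HS s x); apply (Permutation_in _ (Permutation_sym P1)); simpl; auto).
  assert (HR1 : forall s, ~ In (SRetry s) L1) by (intros s H; apply (HR s); apply (Permutation_in _ (Permutation_sym P1)); simpl; auto).
  destruct (Hone L1 be r HS1 HR1 P1') as [s2 [L2 [P2 [E2 _]]]].
  exists s1, s2, L2. repeat split; auto. eapply Permutation_trans; eauto.
Qed.

Ltac notin := simpl; let H := fresh in intro H; repeat (destruct H as [H|H]; [try discriminate H; try (injection H; intros; subst; congruence)|]); try contradiction.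

Definition ProgressFrom (L : list sub) : Prop :=
  forall a P, Flat a L -> WellFormed L -> Permutation P (abstr L) -> (exists Q, preduce P Q) ->
    exists a' P', mplus a a' /\ preduce P P' /\ Sim P' a'.

Lemma progress_after_silent L L1 a a1 P : ProgressFrom L1 ->
  mstep a a1 -> Flat a1 L1 -> WellFormed L1 -> Permutation (abstr L) (abstr L1) ->
  Permutation P (abstr L) -> (exists Q, preduce P Q) ->
  exists a' P', mplus a a' /\ preduce P P' /\ Sim P' a'.
Proof.
  intros IH S1 I1 G1 PA HP HQ.
  destruct (IH a1 P I1 G1 (Permutation_trans HP PA) HQ) as [a' [P' [H1 [H2 H3]]]].
  exists a', P'. repeat split; auto. eapply mplus_cons; eauto.
Qed.

Lemma progress_by_base L lhs rhs rest :
  (forall L', pending L' < pending L -> ProgressFrom L') ->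
  Permutation L (lhs ++ rest) -> BaseRule lhs rhs ->
  pending rhs < pending lhs -> abstr lhs = abstr rhs -> ProgressFrom L.
Proof.
  intros IH P1 HR Hlt Habs a P HI HG HP HQ.
  destruct (fire_base a L _ _ rest HI HG P1 HR) as [a1 [L1 [S1 [I1 [G1 [P1' _]]]]]].
  apply (progress_after_silent L L1 a a1 P); auto.
  - apply IH. rewrite (pending_perm _ _ P1), (pending_perm _ _ P1'), !pending_app. lia.
  - eapply abstr_silent; eauto.
Qed.

Lemma progress_cand L x : (forall L', pending L' < pending L -> ProgressFrom L') ->
  In (SCand x) L -> ProgressFrom L.
Proof.
  intros IH Hy a P HI HG.
  destruct (wf_busy_matched _ HG x (in_fm busy_point L _ x Hy ltac:(simpl; auto))) as [c [z Hz]].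
  assert (Hown : exists s, SyncIn s L /\ In x (dom s)).
  { destruct Hz as [Hz|Hz]; destruct (wf_match_owned _ HG _ _ _ Hz) as [[s1 [? ?]] [[s2 [? ?]] _]];
      eauto using in_dom_pair. }
  destruct Hown as [s [[Ho|Ho] Hd]].
  - destruct (extract2 _ _ L Hy Ho ltac:(discriminate)) as [rest P1].
    revert a P HI HG.
    apply (progress_by_base L _ _ rest IH P1 (base_IIi x s Hd)); [unfold pending, count_kind; simpl; lia | reflexivity].
  - destruct (extract2 _ _ L Hy Ho ltac:(discriminate)) as [rest P1].
    revert a P HI HG.
    apply (progress_by_base L _ _ rest IH P1 (base_IIii x s Hd)); [unfold pending, count_kind; simpl; lia | reflexivity].
Qed.

Lemma progress_match L c x y : (forall L', pending L' < pending L -> ProgressFrom L') ->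
  (forall x, ~ In (SCand x) L) -> In (SMatch c x y) L -> ProgressFrom L.
Proof.
  intros IH HC Hy a P HI HG HP HQ.
  destruct (wf_match_owned _ HG _ _ _ Hy) as [_ [_ [Tx Ty]]].
  assert (Hxy : x <> y).
  { pose proof (nodup_item match_points _ _ (wf_matches _ HG) Hy) as N.
    simpl in N. inversion N; subst. simpl in *. intro; subst; tauto. }
  apply busy_point_cases in Tx as [Tx|[[s Tx]|Tx]]; [exfalso; eapply HC; eauto| |];
  apply busy_point_cases in Ty as [Ty|[[s' Ty]|Ty]]; try (exfalso; eapply HC; eauto; fail).
  - destruct (extract3 _ _ _ L Tx Ty Hy ltac:(congruence) ltac:(discriminate) ltac:(discriminate)) as [rest P1].
    destruct (fire_base a L _ _ rest HI HG P1 (base_IIIi s s' x y c)) as [a1 [L1 [S1 [I1 [G1 [P1' _]]]]]].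
    exists a1, (abstr L1). repeat apply conj.
    + exists a1. split; auto. constructor.
    + apply (preduce_perm _ _ _ _ (abstr_IIIi L L1 _ _ _ _ _ _ HG P1 P1')); auto using Permutation_sym.
    + exists L1. repeat apply conj; auto.
  - destruct (extract3 _ _ _ L Tx Ty Hy ltac:(discriminate) ltac:(discriminate) ltac:(discriminate)) as [rest P1].
    revert a P HI HG HP HQ.
    apply (progress_by_base L _ _ rest IH P1 (base_IIIii s x y c)); [unfold pending, count_kind; simpl; lia | reflexivity].
  - destruct (extract3 _ _ _ L Tx Ty Hy ltac:(discriminate) ltac:(discriminate) ltac:(discriminate)) as [rest P1].
    revert a P HI HG HP HQ.
    apply (progress_by_base L _ _ rest IH P1 (base_IIIiii s' x y c)); [unfold pending, count_kind; simpl; lia | reflexivity].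
  - destruct (extract3 _ _ _ L Tx Ty Hy ltac:(congruence) ltac:(discriminate) ltac:(discriminate)) as [rest P1].
    revert a P HI HG HP HQ.
    apply (progress_by_base L _ _ rest IH P1 (base_IIIiv x y c)); [unfold pending, count_kind; simpl; lia | reflexivity].
Qed.

Lemma progress_retry L s : (forall L', pending L' < pending L -> ProgressFrom L') ->
  In (SRetry s) L -> ProgressFrom L.
Proof.
  intros IH Hy a P HI HG HP HQ.
  apply perm_extract in Hy as [rest P1].
  destruct (fire_retry a L s rest HI HG P1) as [a1 [L1 [s' [S1 [I1 [G1 [P1' [_ Hsnd]]]]]]]].
  apply (progress_after_silent L L1 a a1 P); auto.
  - apply IH. rewrite (pending_perm _ _ P1), (pending_perm _ _ P1').
    change (SOpen s' :: binds s' ++ rest) with ([SOpen s'] ++ binds s' ++ rest).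
    change (SRetry s :: rest) with ([SRetry s] ++ rest).
    rewrite !pending_app, pending_binds. unfold pending at 1 3. unfold count_kind. simpl. lia.
  - eapply Permutation_trans; [apply abstr_perm; eauto|].
    eapply Permutation_trans; [|apply abstr_perm, Permutation_sym; eauto].
    simpl. rewrite abstr_app, abstr_binds, Hsnd. auto.
Qed.

(* Two open synchronizers offering c and its co-action commit together:
   rules I, II.i (twice) and III.i. *)
Lemma commit_pair a L s1 s2 x y c : Flat a L -> WellFormed L ->
  In (SOpen s1) L -> In (SOpen s2) L -> s1 <> s2 -> x <> y ->
  In (x, AIn c) s1 -> In (y, AOut c) s2 ->
  In (SBind x (AIn c)) L -> In (SBind y (AOut c)) L -> In (SFree c) L ->
  exists a' L', mplus a a' /\ Flat a' L' /\ WellFormed L' /\ preduce (abstr L) (abstr L').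
Proof.
  intros HI HG O1 O2 Hs Hxy Hx Hy Bx By Fc.
  destruct (extract3 _ _ _ L Bx By Fc ltac:(congruence) ltac:(discriminate) ltac:(discriminate)) as [rest1 P1].
  destruct (fire_base a L _ _ rest1 HI HG P1 (base_I x y c)) as [a1 [L1 [S1 [I1 [G1 [P1' _]]]]]].
  assert (O1' : In (SOpen s1) L1) by (eapply (carry L L1); eauto; notin).
  assert (O2' : In (SOpen s2) L1) by (eapply (carry L L1); eauto; notin).
  assert (Cx : In (SCand x) L1) by (apply (Permutation_in _ (Permutation_sym P1')); simpl; auto).
  assert (Cy : In (SCand y) L1) by (apply (Permutation_in _ (Permutation_sym P1')); simpl; auto).
  assert (Mxy : In (SMatch c x y) L1) by (apply (Permutation_in _ (Permutation_sym P1')); simpl; auto).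
  destruct (extract2 _ _ L1 Cx O1' ltac:(discriminate)) as [rest2 P2].
  destruct (fire_base a1 L1 _ _ rest2 I1 G1 P2 (base_IIi x s1 (in_dom_pair _ _ _ Hx)))
    as [a2 [L2 [S2 [I2 [G2 [P2' _]]]]]].
  assert (Cy2 : In (SCand y) L2) by (eapply (carry L1 L2); eauto; notin).
  assert (O22 : In (SOpen s2) L2) by (eapply (carry L1 L2); eauto; notin).
  assert (M2 : In (SMatch c x y) L2) by (eapply (carry L1 L2); eauto; notin).
  assert (Sx2 : In (SSelect s1 x) L2) by (apply (Permutation_in _ (Permutation_sym P2')); simpl; auto).
  destruct (extract2 _ _ L2 Cy2 O22 ltac:(discriminate)) as [rest3 P3].
  destruct (fire_base a2 L2 _ _ rest3 I2 G2 P3 (base_IIi y s2 (in_dom_pair _ _ _ Hy)))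
    as [a3 [L3 [S3 [I3 [G3 [P3' _]]]]]].
  assert (Sx3 : In (SSelect s1 x) L3) by (eapply (carry L2 L3); eauto; notin).
  assert (M3 : In (SMatch c x y) L3) by (eapply (carry L2 L3); eauto; notin).
  assert (Sy3 : In (SSelect s2 y) L3) by (apply (Permutation_in _ (Permutation_sym P3')); simpl; auto).
  destruct (extract3 _ _ _ L3 Sx3 Sy3 M3 ltac:(congruence) ltac:(discriminate) ltac:(discriminate)) as [rest4 P4].
  destruct (fire_base a3 L3 _ _ rest4 I3 G3 P4 (base_IIIi s1 s2 x y c)) as [a4 [L4 [S4 [I4 [G4 [P4' _]]]]]].
  assert (A1 : Permutation (abstr L) (abstr L3)).
  { eapply Permutation_trans; [eapply (abstr_silent L L1); eauto|].
    eapply Permutation_trans; [eapply (abstr_silent L1 L2); eauto|]. eapply (abstr_silent L2 L3); eauto. }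
  exists a4, L4. repeat apply conj; auto.
  - exists a1. split; [exact S1|]. apply (mstar_step _ a2); [exact S2|].
    apply (mstar_step _ a3); [exact S3|]. apply (mstar_step _ a4); [exact S4|]. constructor.
  - apply (preduce_perm _ _ _ _ (abstr_IIIi L3 L4 _ _ _ _ _ _ G3 P4 P4')); auto using Permutation_sym.
Qed.

(* With no candidate, match or retry left, every select of the program is an
   open synchronizer whose points are all unmatched, so a program reduction
   is simulated by committing the corresponding pair. *)
Lemma quiescent L : (forall x, ~ In (SCand x) L) -> (forall c x y, ~ In (SMatch c x y) L) ->
  (forall s, ~ In (SRetry s) L) -> ProgressFrom L.
Proof.
  intros HC HM HR a P HI HG HP [Q [al [be [c [r [Pp [Hal [Hbe Pq]]]]]]]].
  assert (HS : forall s x, ~ In (SSelect s x) L).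
  { intros s x H. destruct (wf_busy_matched _ HG x (in_fm busy_point L _ x H ltac:(simpl; auto)))
      as [c' [y [H'|H']]]; eapply HM; eauto. }
  assert (PA : Permutation (abstr L) (CSel al :: CSel be :: r))
    by (eapply Permutation_trans; [apply Permutation_sym|]; eauto).
  destruct (two_opens L al be r HS HR PA) as [s1 [s2 [rest0 [PL [E1 E2]]]]]. subst al be.
  apply in_map_iff in Hal as [[x a1'] [Ex Hx]]. simpl in Ex. subst a1'.
  apply in_map_iff in Hbe as [[y b1'] [Ey Hy]]. simpl in Ey. subst b1'.
  assert (O1 : In (SOpen s1) L) by (apply (Permutation_in _ (Permutation_sym PL)); simpl; auto).
  assert (O2 : In (SOpen s2) L) by (apply (Permutation_in _ (Permutation_sym PL)); simpl; auto).
  assert (D : NoDup (dom s1 ++ dom s2 ++ flat_map sync_dom rest0)).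
  { eapply Permutation_NoDup; [apply (Permutation_flat_map sync_dom PL)|]. apply (wf_syncs _ HG). }
  assert (Hxy : x <> y).
  { intro E; subst y. eapply nodup_disj; eauto. eapply in_dom_pair; eauto.
    apply in_or_app; left. eapply in_dom_pair; eauto. }
  assert (Hs : s1 <> s2).
  { intro E; subst s2. eapply nodup_disj; eauto. eapply in_dom_pair; eauto.
    apply in_or_app; left. eapply in_dom_pair; eauto. }
  assert (Bx : In (SBind x (AIn c)) L)
    by (destruct (wf_open_points _ HG s1 x (AIn c) O1 Hx) as [?|?]; auto; exfalso; eapply HC; eauto).
  assert (By : In (SBind y (AOut c)) L)
    by (destruct (wf_open_points _ HG s2 y (AOut c) O2 Hy) as [?|?]; auto; exfalso; eapply HC; eauto).
  assert (Fc : In (SFree c) L).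
  { destruct (wf_chan_present _ HG s1 x (AIn c) (or_introl O1) Hx) as [?|[x' [y' ?]]]; auto.
    exfalso; eapply HM; eauto. }
  destruct (commit_pair a L s1 s2 x y c HI HG O1 O2 Hs Hxy Hx Hy Bx By Fc) as [a' [L' [S [I' [G' PR]]]]].
  exists a', (abstr L'). repeat apply conj; auto.
  - apply (preduce_perm _ _ _ _ PR); auto using Permutation_sym.
  - exists L'. repeat apply conj; auto.
Qed.

(* Progress, by well-founded induction on the pending work: resolve candidates,
   then matches, then retries, and finally commit a pair of selects. *)
Lemma progress L : ProgressFrom L.
Proof.
  remember (pending L) as m eqn:Hm. revert L Hm.
  induction m as [m IH] using lt_wf_ind. intros L Hm.
  assert (IH' : forall L', pending L' < pending L -> ProgressFrom L')
    by (intros L' Hlt; apply (IH (pending L')); lia).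
  destruct (find isCand L) as [y|] eqn:Ec.
  { apply find_some in Ec as [Hy Hc]. destruct y; try discriminate. exact (progress_cand L p IH' Hy). }
  assert (HC : forall x, ~ In (SCand x) L) by (intros x Hx; eapply find_none in Ec; eauto; discriminate).
  destruct (find isMatch L) as [y|] eqn:Em.
  { apply find_some in Em as [Hy Hm']. destruct y; try discriminate. exact (progress_match L _ _ _ IH' HC Hy). }
  assert (HM : forall c x y, ~ In (SMatch c x y) L)
    by (intros c x y Hx; eapply find_none in Em; eauto; discriminate).
  destruct (find isRetry L) as [y|] eqn:Er.
  { apply find_some in Er as [Hy Hr]. destruct y; try discriminate. exact (progress_retry L s IH' Hy). }
  apply quiescent; auto.
  intros s Hx. eapply find_none in Er; eauto. discriminate.
Qed.

Lemma is_sim_Sim : is_sim Sim.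
Proof.
  intros P st [L [HI [HG HP]]]. repeat apply conj.
  - destruct (correspondence (length (filter isDone L)) L st (le_n _) HI HG) as [st' [H1 H2]].
    exists st'. split; auto. exact (Permutation_trans (den_prog_perm _ _ HP) H2).
  - intros st' HS. eapply safety; eauto.
  - intros HQ. eapply progress; eauto.
Qed.

Inductive FlatSeq : nat -> list state -> list sub -> nat -> Prop :=
| fseq_nil lo : FlatSeq lo [] [] lo
| fseq_cons lo mid hi x xs Lx Lxs : Flat x Lx ->
    (forall n, In n (names Lx) -> Nat.odd n = true -> lo <= n < mid) -> lo <= mid ->
    FlatSeq mid xs Lxs hi -> FlatSeq lo (x :: xs) (Lx ++ Lxs) hi.

Lemma flat_seq_bound lo xs L hi : FlatSeq lo xs L hi -> forall n, In n (names L) ->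
  Nat.odd n = true -> lo <= n.
Proof.
  induction 1; intros n Hn Ho; [contradiction|]. rewrite names_app in Hn. apply in_app_or in Hn as [Hn|Hn].
  apply H0 in Hn; auto; lia. apply IHFlatSeq in Hn; auto; lia.
Qed.

Lemma flat_seq_par lo x xs L hi : FlatSeq lo (x :: xs) L hi -> Flat (parl x xs) L.
Proof.
  revert lo x L. induction xs as [|y ys IH]; intros lo x L H;
    inversion H as [|lo' mid hi' x' xs' Lx Lxs HI HB Hle HS]; subst.
  - inversion HS; subst. rewrite app_nil_r. auto.
  - simpl. constructor; auto. eapply IH; eauto.
    intros n Hn Ho Hc. apply HB in Hn; auto. apply (flat_seq_bound _ _ _ _ HS) in Hc; auto. lia.
Qed.

Lemma flat_seq_app lo mid hi xs ys L1 L2 : FlatSeq lo xs L1 mid -> FlatSeq mid ys L2 hi ->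
  FlatSeq lo (xs ++ ys) (L1 ++ L2) hi.
Proof.
  induction 1; intro Hy; simpl; auto. rewrite <- app_assoc. econstructor; eauto.
Qed.

Definition odd_name (b : nat) := 2 * b + 1.

Definition flat_sel (n : nat) (al : list action) : list sub :=
  let s := combine (map odd_name (seq n (length al))) al in SOpen s :: binds s.

Fixpoint flat_hat (n : nat) (P : program) : list sub :=
  match P with
  | [] => []
  | CAct a :: P' => SAct a :: flat_hat n P'
  | CSel al :: P' => flat_sel n al ++ flat_hat (n + length al) P'
  end.

Fixpoint sel_points (P : program) : nat :=
  match P with [] => 0 | CAct _ :: P' => sel_points P' | CSel al :: P' => length al + sel_points P' end.

Lemma map_fst_combine {A B} (l : list A) (l' : list B) : length l = length l' -> map fst (combine l l') = l.
Proof. revert l'; induction l; intros [|b l'] H; simpl in *; try discriminate; auto. rewrite IHl; auto. Qed.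

Lemma map_snd_combine {A B} (l : list A) (l' : list B) : length l = length l' -> map snd (combine l l') = l'.
Proof. revert l'; induction l; intros [|b l'] H; simpl in *; try discriminate; auto. rewrite IHl; auto. Qed.

Lemma dom_sel n al : dom (combine (map odd_name (seq n (length al))) al) = map odd_name (seq n (length al)).
Proof. unfold dom. apply map_fst_combine. rewrite length_map, length_seq. auto. Qed.

Lemma ren_sync_combine h (l : list nat) (al : list action) : ren_sync h (combine l al) = combine (map h l) al.
Proof. revert al; induction l as [|b l IH]; intros [|a al]; simpl; auto. rewrite IH. auto. Qed.

Lemma flat_hat_sel n al : Flat (hat_sel n al) (flat_sel n al).
Proof.
  unfold hat_sel, flat_sel. set (s := combine (seq n (length al)) al).
  assert (Eb : bindings s = map Sub (binds s)) by (unfold bindings, binds; rewrite map_map; auto).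
  rewrite Eb, parl_par_subs.
  replace (SOpen (combine (map odd_name (seq n (length al))) al) :: binds (combine (map odd_name (seq n (length al))) al))
    with (map (ren (psi (seq n (length al)) (fun b => b))) (map enc (SOpen s :: binds s))).
  - apply flat_nus_phi.
    + apply seq_NoDup.
    + apply flat_par_subs. discriminate.
    + intros b _ _ Hc. apply names_enc_even in Hc. rewrite Nat.odd_odd in Hc. discriminate.
    + auto.
  - unfold enc. rewrite map_ren_comp. simpl. rewrite binds_ren. unfold s. rewrite ren_sync_combine.
    replace (map (fun n0 => psi (seq n (length al)) (fun b => b) (dbl n0)) (seq n (length al)))
      with (map odd_name (seq n (length al))); auto.
    apply map_ext_in. intros b Hb. unfold dbl. rewrite psi_dbl. unfold phi. destruct in_dec; [auto|contradiction].
Qed.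

Lemma names_flat_sel n al : forall x, In x (names (flat_sel n al)) -> In x (map odd_name (seq n (length al))).
Proof.
  intros x Hx. unfold flat_sel in Hx. change (names (SOpen ?s :: binds ?s)) with (dom s ++ names (binds s)) in Hx.
  rewrite names_binds, dom_sel in Hx. apply in_app_or in Hx as [?|?]; auto.
Qed.

Lemma flat_seq_hat P : forall n, FlatSeq (2*n) (hat_comps n P) (flat_hat n P) (2*(n + sel_points P)).
Proof.
  induction P as [|S P IH]; intro n; cbn [hat_comps flat_hat sel_points].
  - rewrite Nat.add_0_r. constructor.
  - destruct S as [a|al].
    + change (SAct a :: flat_hat n P) with ([SAct a] ++ flat_hat n P). econstructor; [constructor| |auto|apply IH].
      intros m Hm. unfold names in Hm. simpl in Hm. contradiction.
    + apply (fseq_cons (2*n) (2*(n + length al))); [apply flat_hat_sel| | |].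
      * intros m Hm Ho. apply names_flat_sel in Hm. apply in_map_iff in Hm as [b [E Hb]]. apply in_seq in Hb.
        unfold odd_name in E. lia.
      * lia.
      * replace (2 * (n + (length al + sel_points P))) with (2 * (n + length al + sel_points P)) by lia. apply IH.
Qed.

Lemma flat_seq_free C : FlatSeq 0 (map (fun c => Sub (SFree c)) C) (map SFree C) 0.
Proof.
  induction C as [|c C IH]; simpl. constructor.
  change (SFree c :: map SFree C) with ([SFree c] ++ map SFree C). econstructor; eauto. constructor.
  intros m Hm. unfold names in Hm. simpl in Hm. contradiction.
Qed.

Lemma hat_comps_ne P n : P <> [] -> hat_comps n P <> [].
Proof. destruct P as [|[a|al] P]; simpl; congruence. Qed.

Lemma flat_compile C P : P <> [] -> Flat (compile C P) (map SFree C ++ flat_hat 0 P).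
Proof.
  intro HP. unfold compile.
  pose proof (flat_seq_app _ _ _ _ _ _ _ (flat_seq_free C) (flat_seq_hat P 0)) as HS.
  destruct (map (fun c => Sub (SFree c)) C ++ hat_comps 0 P) as [|x xs] eqn:E.
  - exfalso. apply (hat_comps_ne P 0 HP). destruct (hat_comps 0 P); auto. destruct (map _ C); discriminate.
  - eapply flat_seq_par; eauto.
Qed.

Lemma fm_free (f : sub -> list nat) C : (forall c, f (SFree c) = []) -> flat_map f (map SFree C) = [].
Proof. intro H. induction C; simpl; auto. rewrite H, IHC. auto. Qed.

Lemma flat_hat_fm (f : sub ->
  list nat) (Hf : forall a, f (SAct a) = []) (Hbd : forall p a, f (SBind p a) = [])
  (Ho : forall s, f (SOpen s) = dom s) P : forall n, flat_map f (flat_hat n P) = map odd_name (seq n (sel_points P)).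
Proof.
  induction P as [|[a|al] P IH]; intro n; simpl; auto.
  - rewrite Hf. simpl. auto.
  - rewrite flat_map_app, IH. unfold flat_sel. simpl. rewrite Ho, fm_binds_nil by auto. rewrite dom_sel.
    rewrite seq_app, map_app. rewrite ?app_nil_r. auto.
Qed.

Lemma flat_hat_points P : forall n, flat_map point_of (flat_hat n P) = map odd_name (seq n (sel_points P)).
Proof.
  induction P as [|[a|al] P IH]; intro n; simpl; auto.
  rewrite flat_map_app, IH. unfold flat_sel. simpl. rewrite fm_binds_points. rewrite dom_sel.
  rewrite seq_app, map_app. auto.
Qed.

Lemma flat_hat_fm_nil (f : sub ->
  list nat) (Hf : forall a, f (SAct a) = []) (Hbd : forall p a, f (SBind p a) = [])
  (Ho : forall s, f (SOpen s) = []) P : forall n, flat_map f (flat_hat n P) = [].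
Proof.
  induction P as [|[a|al] P IH]; intro n; simpl; auto.
  - rewrite Hf. simpl. auto.
  - rewrite flat_map_app, IH. unfold flat_sel. simpl. rewrite Ho, fm_binds_nil by auto. auto.
Qed.

Lemma flat_hat_items P : forall n y, In y (flat_hat n P) ->
  (exists a, y = SAct a) \/
  (exists s al, y = SOpen s /\ In (CSel al) P /\ map snd s = al /\ (forall x a, In (x, a) s ->
  In (SBind x a) (flat_hat n P))) \/
  (exists x a s, y = SBind x a /\ In (SOpen s) (flat_hat n P) /\ In (x, a) s).
Proof.
  induction P as [|[a|al] P IH]; intros n y Hy; cbn [flat_hat] in Hy; [contradiction| |].
  - destruct Hy as [Hy|Hy]; [left; eauto|].
    destruct (IH n y Hy) as [H|[[s [al [E1 [E2 [E3 E4]]]]]|[x [a' [s [E1 [E2 E3]]]]]]]; auto.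
    + right; left. exists s, al. repeat split; simpl; auto.
    + right; right. exists x, a', s. repeat split; simpl; auto.
  - apply in_app_or in Hy as [Hy|Hy].
    + unfold flat_sel in Hy. simpl in Hy. destruct Hy as [Hy|Hy].
      * right; left. subst. eexists; exists al. repeat split; simpl; auto.
        -- apply map_snd_combine. rewrite length_map, length_seq. auto.
        -- intros x a' Ha. right. apply in_or_app. left. apply binds_in; auto.
      * apply in_binds in Hy as [x [a' [E Ha]]]. right; right.
        exists x, a', (combine (map odd_name (seq n (length al))) al).
        repeat split; auto. apply in_or_app; left. unfold flat_sel; simpl; auto.
    + destruct (IH _ y Hy) as [H|[[s [al' [E1 [E2 [E3 E4]]]]]|[x [a' [s [E1 [E2 E3]]]]]]]; auto.
      * right; left. exists s, al'. split; [auto|split; [right; auto|split; [auto|]]].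
        intros x a Ha. cbn [flat_hat]. apply in_or_app; right; auto.
      * right; right. exists x, a', s. split; auto. split; auto. cbn [flat_hat]. apply in_or_app; right; auto.
Qed.

Lemma abstr_hat P : forall n, abstr (flat_hat n P) = P.
Proof.
  induction P as [|[a|al] P IH]; intro n; simpl; auto.
  - rewrite IH. auto.
  - rewrite abstr_app, IH. unfold flat_sel. simpl. rewrite abstr_binds.
    rewrite map_snd_combine; auto. rewrite length_map, length_seq. auto.
Qed.

Lemma abstr_free C : abstr (map SFree C) = [].
Proof. induction C; simpl; auto. Qed.

Lemma odd_name_inj : forall x y, odd_name x = odd_name y -> x = y.
Proof. unfold odd_name. intros. lia. Qed.

(* The compiled state is well formed: every channel offered by a select occurs in P,
   hence is free. *)
Lemma wf_init C P : (forall c, In c C <-> occurs c P) -> WellFormed (map SFree C ++ flat_hat 0 P).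
Proof.
  intro HC.
  assert (Hit : forall y, In y (map SFree C ++ flat_hat 0 P) -> (exists c, y = SFree c) \/ In y (flat_hat 0 P)).
  { intros y Hy. apply in_app_or in Hy as [Hy|Hy]; auto. apply in_map_iff in Hy as [c [E _]]. eauto. }
  assert (Hno : forall y, In y (map SFree C ++ flat_hat 0 P) ->
     (exists c, y = SFree c) \/ (exists a, y = SAct a) \/ (exists s, y = SOpen s) \/ (exists x a, y = SBind x a)).
  { intros y Hy. destruct (Hit y Hy) as [?|Hy']; auto.
    destruct (flat_hat_items P 0 y Hy') as [?|[[s [al [E _]]]|[x [a [s [E _]]]]]]; eauto 10. }
  constructor.
  - rewrite flat_map_app, fm_free by auto. rewrite flat_hat_fm; auto.
    apply (FinFun.Injective_map_NoDup odd_name_inj), seq_NoDup.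
  - rewrite flat_map_app, fm_free by auto. rewrite flat_hat_points.
    apply (FinFun.Injective_map_NoDup odd_name_inj), seq_NoDup.
  - rewrite flat_map_app, fm_free, flat_hat_fm_nil by auto. constructor.
  - intros x a Hx. destruct (Hit _ Hx) as [[c E]|Hx']; [discriminate|].
    destruct (flat_hat_items P 0 _ Hx') as [[? E]|[[s [al [E _]]]|[x' [a' [s [E [E2 E3]]]]]]]; try discriminate.
    injection E; intros; subst. exists s. split; auto. left. apply in_or_app; auto.
  - intros c x y Hx. exfalso. destruct (Hno _ Hx) as [[? E]|[[? E]|[[? E]|[? [? E]]]]]; discriminate.
  - intros x Hx. exfalso. rewrite flat_map_app, fm_free, flat_hat_fm_nil in Hx by auto. contradiction.
  - intros s x Hx. exfalso. destruct (Hno _ Hx) as [[? E]|[[? E]|[[? E]|[? [? E]]]]]; discriminate.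
  - intros s x Hx. exfalso. destruct (Hno _ Hx) as [[? E]|[[? E]|[[? E]|[? [? E]]]]]; discriminate.
  - intros s Hx. exfalso. destruct (Hno _ Hx) as [[? E]|[[? E]|[[? E]|[? [? E]]]]]; discriminate.
  - intros s x a Hx Ha. destruct (Hit _ Hx) as [[c E]|Hx']; [discriminate|].
    destruct (flat_hat_items P 0 _ Hx') as [[? E]|[[s' [al [E [_ [_ E4]]]]]|[x' [a' [s' [E _]]]]]]; try discriminate.
    injection E; intros; subst. left. apply in_or_app; right; auto.
  - intros s x a [Hx|Hx] Ha.
    + destruct (Hit _ Hx) as [[c E]|Hx']; [discriminate|].
      destruct (flat_hat_items P 0 _ Hx') as [[? E]|[[s' [al [E [E2 [E3 _]]]]]|[x' [a' [s' [E _]]]]]]; try discriminate.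
      injection E; intros; subst. left. apply in_or_app; left. apply in_map. apply HC.
      exists (CSel (map snd s')). split; auto. simpl. apply in_map. apply in_map_iff. exists (x, a); auto.
    + exfalso. destruct (Hno _ Hx) as [[? E]|[[? E]|[[? E]|[? [? E]]]]]; discriminate.
Qed.

Theorem theorem1 (P : program) (C : list chan) :
  P <> [] ->
  NoDup C ->
  (forall c, In c C <-> occurs c P) ->
  sim P (compile C P).
Proof.
  intros HP _ HC. exists Sim. split; [exact is_sim_Sim|].
  exists (map SFree C ++ flat_hat 0 P). repeat apply conj.
  - apply flat_compile; auto.
  - apply wf_init; auto.
  - rewrite abstr_app, abstr_free, abstr_hat. auto.
Qed.
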